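(* Let $(V,m)$ be a discrete measure space and $(b,c)$ a connected graph over $(V,m)$. If there exists $f\in D(Q^{(N)})$ with $f_\infty\neq0$, then $Q^{(N)}\neq Q^{(D)}$. If, moreover, (FC) holds, i.e. $\widetilde L C_c(V)\subseteq\ell^2(V,m)$, then the restriction of $\widetilde L$ to $C_c(V)$ is not essentially selfadjoint in $\ell^2(V,m)$.
   Context: $V$ is a finite or countably infinite set and $m:V\to(0,\infty)$; $(V,m)$ is a discrete measure space. $C(V)$ is the set of all functions $V\to\mathbb C$, $C_c(V)$ the finitely supported ones, and $\ell^2(V,m)$ carries $\langle u,v\rangle=\sum_x u(x)\overline{v(x)}m(x)$. A graph over $(V,m)$ is a pair $(b,c)$ with $c:V\to[0,\infty)$, $b:V\times V\to[0,\infty)$, $b(x,x)=0$, $b(x,y)=b(y,x)$, $\sum_y b(x,y)<\infty$. A path from $x$ to $y$ is a finite sequence $x=x_1,\dots,x_n=y$ with $b(x_j,x_{j+1})>0$; the graph is connected if any two vertices are joined by a path. Let $\widetilde F=\{u\in C(V):\sum_y|b(x,y)u(y)|<\infty\ \forall x\}$ and $\widetilde L u(x)=\frac{1}{m(x)}\sum_y b(x,y)(u(x)-u(y))+\frac{c(x)}{m(x)}u(x)$ for $u\in\widetilde F$. $Q^{(N)}$ is the form on $\ell^2(V,m)$ with domain $D(Q^{(N)})=\{u\in\ell^2(V,m):\frac12\sum_{x,y}b(x,y)|u(x)-u(y)|^2+\sum_x c(x)|u(x)|^2<\infty\}$ and $Q^{(N)}(u,v)=\frac12\sum_{x,y}b(x,y)(u(x)-u(y))\overline{(v(x)-v(y))}+\sum_x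 c(x)u(x)\overline{v(x)}$. $Q^{(D)}$ is the closure of the restriction of $Q^{(N)}$ to $C_c(V)$. The length of a path $\gamma=(x_1,\dots,x_n)$ is $L(\gamma)=\sum_{j=1}^{n-1}b(x_j,x_{j+1})^{-1/2}$ and $d(x,y)=\inf\{L(\gamma):\gamma\text{ a path from }x\text{ to }y\}$, a metric on $V$. $\widehat V$ is the metric completion of $(V,d)$ and $V_\infty=\widehat V\setminus V$. Every $u\in D(Q^{(N)})$ satisfies $|u(x)-u(y)|\le Q^{(N)}(u,u)^{1/2}d(x,y)$ and extends uniquely to a Lipschitz function $\widehat u$ on $\widehat V$; $u_\infty$ is the restriction of $\widehat u$ to $V_\infty$ (and $u_\infty:=0$ if $V_\infty=\emptyset$). *)

From Stdlib Require Import Reals Lra List.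
Import ListNotations.
Open Scope R_scope.

Definition Cplx := (R * R)%type.
Definition RtoC (r : R) : Cplx := (r, 0).
Definition C0 : Cplx := (0, 0).
Definition Cadd (z w : Cplx) : Cplx := (fst z + fst w, snd z + snd w).
Definition Copp (z : Cplx) : Cplx := (- fst z, - snd z).
Definition Csub (z w : Cplx) : Cplx := Cadd z (Copp w).
Definition Cmul (z w : Cplx) : Cplx :=
  (fst z * fst w - snd z * snd w, fst z * snd w + snd z * fst w).
Definition Cconj (z : Cplx) : Cplx := (fst z, - snd z).
Definition Cscale (r : R) (z : Cplx) : Cplx := (r * fst z, r * snd z).
Definition Cnorm2 (z : Cplx) : R := fst z * fst z + snd z * snd z.
Definition Cnorm (z : Cplx) : R := sqrt (Cnorm2 z).

Definition Csum {I : Type} (f : I -> Cplx) (l : list I) : Cplx :=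
  fold_right (fun i acc => Cadd (f i) acc) C0 l.

Definition HasSumC {I : Type} (f : I -> Cplx) (z : Cplx) : Prop :=
  forall eps, 0 < eps -> exists l0 : list I,
    forall l, NoDup l -> incl l0 l -> Cnorm (Csub (Csum f l) z) < eps.

Definition HasSumR {I : Type} (f : I -> R) (s : R) : Prop :=
  HasSumC (fun i => RtoC (f i)) (RtoC s).

Section Graph.
Variable V : Type.
Variable m : V -> R.
Variable b : V -> V -> R.
Variable c : V -> R.

(* [is_path x l y]: x = x_1, l = [x_2; ...; x_n], x_n = y, b(x_j,x_{j+1}) > 0 *)
Inductive is_path : V -> list V -> V -> Prop :=
| path_single : forall x, is_path x [] x
| path_step : forall x z l y, 0 < b x z -> is_path z l y -> is_path x (z :: l) y.

Definition connected : Prop := forall x y, exists l, is_path x l y.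

Fixpoint path_length (x : V) (l : list V) : R :=
  match l with
  | [] => 0
  | z :: l' => / sqrt (b x z) + path_length z l'
  end.

(* [dist_le x y r] means d(x,y) <= r, where d(x,y) = inf over paths of L *)
Definition dist_le (x y : V) (r : R) : Prop :=
  forall eps, 0 < eps -> exists l, is_path x l y /\ path_length x l < r + eps.

Definition d_cauchy (xs : nat -> V) : Prop :=
  forall eps, 0 < eps -> exists N, forall n k, (N <= n)%nat -> (N <= k)%nat ->
    dist_le (xs n) (xs k) eps.

Definition d_converges_to (xs : nat -> V) (x : V) : Prop :=
  forall eps, 0 < eps -> exists N, forall n, (N <= n)%nat -> dist_le (xs n) x eps.

Definition C_converges_to (zs : nat -> Cplx) (z : Cplx) : Prop :=
  forall eps, 0 < eps -> exists N, forall n, (N <= n)%nat -> Cnorm (Csub (zs n) z) < eps.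

(* f_infty <> 0: some point of V_infty = hat V \ V (represented by a d-Cauchy
   sequence in V without limit in V) at which the Lipschitz extension hat f
   (= limit of f along the sequence) is nonzero. *)
Definition boundary_value_nonzero (f : V -> Cplx) : Prop :=
  exists xs : nat -> V, d_cauchy xs /\ (~ exists x, d_converges_to xs x) /\
    exists z, z <> C0 /\ C_converges_to (fun n => f (xs n)) z.

Definition Cc (u : V -> Cplx) : Prop :=
  exists l : list V, forall x, ~ In x l -> u x = C0.

Definition l2 (u : V -> Cplx) : Prop :=
  exists s, HasSumR (fun x => Cnorm2 (u x) * m x) s.

Definition l2dist2_le (u v : V -> Cplx) (r : R) : Prop :=
  exists s, HasSumR (fun x => Cnorm2 (Csub (u x) (v x)) * m x) s /\ s <= r.

Definition l2_converges_to (us : nat -> V -> Cplx) (u : V -> Cplx) : Prop :=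
  forall eps, 0 < eps -> exists N, forall n, (N <= n)%nat -> l2dist2_le (us n) u eps.

Definition inner_is (u v : V -> Cplx) (z : Cplx) : Prop :=
  HasSumC (fun x => Cscale (m x) (Cmul (u x) (Cconj (v x)))) z.
Definition inner_eq (u1 v1 u2 v2 : V -> Cplx) : Prop :=
  exists z, inner_is u1 v1 z /\ inner_is u2 v2 z.

Definition energy_is (u : V -> Cplx) (s : R) : Prop :=
  exists s1 s2,
    HasSumR (fun p : V * V => b (fst p) (snd p) * Cnorm2 (Csub (u (fst p)) (u (snd p)))) s1 /\
    HasSumR (fun x => c x * Cnorm2 (u x)) s2 /\ s = s1 / 2 + s2.

Definition DQN (u : V -> Cplx) : Prop := l2 u /\ exists s, energy_is u s.

Definition QN_val (u v : V -> Cplx) (z : Cplx) : Prop :=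
  exists z1 z2,
    HasSumC (fun p : V * V => Cscale (b (fst p) (snd p))
               (Cmul (Csub (u (fst p)) (u (snd p))) (Cconj (Csub (v (fst p)) (v (snd p)))))) z1 /\
    HasSumC (fun x => Cscale (c x) (Cmul (u x) (Cconj (v x)))) z2 /\
    z = Cadd (Cscale (/ 2) z1) z2.

Definition approx_seq (phis : nat -> V -> Cplx) (u : V -> Cplx) : Prop :=
  (forall n, Cc (phis n)) /\ l2_converges_to phis u /\
  forall eps, 0 < eps -> exists N, forall n k, (N <= n)%nat -> (N <= k)%nat ->
    exists s, energy_is (fun x => Csub (phis n x) (phis k x)) s /\ s < eps.

Definition DQD (u : V -> Cplx) : Prop := l2 u /\ exists phis, approx_seq phis u.

Definition QD_val (u v : V -> Cplx) (z : Cplx) : Prop :=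
  exists phis psis zs, approx_seq phis u /\ approx_seq psis v /\
    (forall n, QN_val (phis n) (psis n) (zs n)) /\ C_converges_to zs z.

Definition form_eq (D1 : (V -> Cplx) -> Prop) (q1 : (V -> Cplx) -> (V -> Cplx) -> Cplx -> Prop)
                   (D2 : (V -> Cplx) -> Prop) (q2 : (V -> Cplx) -> (V -> Cplx) -> Cplx -> Prop) : Prop :=
  (forall u, D1 u <-> D2 u) /\
  (forall u v z, D1 u -> D1 v -> (q1 u v z <-> q2 u v z)).

Definition Ltilde_at (u : V -> Cplx) (x : V) (z : Cplx) : Prop :=
  exists s, HasSumC (fun y => Cscale (b x y) (Csub (u x) (u y))) s /\
    z = Cscale (/ m x) (Cadd s (Cscale (c x) (u x))).

Definition FC : Prop :=
  forall phi, Cc phi -> exists w, l2 w /\ forall x, Ltilde_at phi x (w x).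

(* operators on l^2 are given by their graphs *)
Definition L0_graph (u w : V -> Cplx) : Prop := Cc u /\ forall x, Ltilde_at u x (w x).

Definition closure_graph (G : (V -> Cplx) -> (V -> Cplx) -> Prop) (u w : V -> Cplx) : Prop :=
  l2 u /\ l2 w /\ exists us ws : nat -> V -> Cplx,
    (forall n, G (us n) (ws n)) /\ l2_converges_to us u /\ l2_converges_to ws w.

Definition adjoint_graph (G : (V -> Cplx) -> (V -> Cplx) -> Prop) (v w : V -> Cplx) : Prop :=
  l2 v /\ l2 w /\ forall u u', G u u' -> inner_eq u' v u w.

Definition selfadjoint (G : (V -> Cplx) -> (V -> Cplx) -> Prop) : Prop :=
  forall v w, G v w <-> adjoint_graph G v w.

Definition essentially_selfadjoint (G : (V -> Cplx) -> (V -> Cplx) -> Prop) : Prop :=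
  selfadjoint (closure_graph G).

End Graph.

(* If [f] were in [D(Q^(D))], it would be the [l^2]-limit of finitely supported
   [phi_n] that are Cauchy for the energy.  Such [phi_n] are uniformly Lipschitz
   for the path metric [d], and each vanishes eventually along a Cauchy sequence
   leaving [V]; so the limit has boundary value [0], contradicting [f_infty <> 0].

   For the operator, decompose (the real or imaginary part of) [f] in the Hilbert
   space of the norm [Q^(N)(u) + |u|^2] as [(f - h) + h], with [f - h] in the
   closure of [C_c(V)] and [h] orthogonal to [C_c(V)].  Orthogonality to the point
   masses means [L~ h = -h], and [h <> 0] because [f - h] has boundary value [0].
   Green's formula puts [(h, -h)] in the adjoint of the closure of [L~] on [C_c(V)],
   whereas [<L~ phi + phi, phi> >= |phi|^2] on [C_c(V)] keeps [(h, -h)] out of that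
   closure; hence the closure is not selfadjoint. *)

From Stdlib Require Import Reals Lra Lia List ClassicalEpsilon Classical Permutation FunctionalExtensionality.
Import ListNotations.
Open Scope R_scope.

Definition classic_eq_dec {I : Type} (x y : I) : {x = y} + {x <> y} :=
  excluded_middle_informative (x = y).

Definition asbool (P : Prop) : bool := if excluded_middle_informative P then true else false.

Lemma asboolT (P : Prop) : asbool P = true <-> P.
Proof. unfold asbool; destruct (excluded_middle_informative P); split; intuition congruence. Qed.

Lemma Rabs_le_inv (x y : R) : Rabs x <= y -> - y <= x <= y.
Proof. intros H. pose proof (Rle_abs x). pose proof (Rle_abs (- x)). rewrite Rabs_Ropp in *. lra. Qed.

Lemma Un_cv_const (r : R) : Un_cv (fun _ => r) r.
Proof. intros e He; exists 0%nat; intros; unfold Rdist; rewrite Rminus_diag, Rabs_R0; auto. Qed.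

Lemma Rabs_lt_of_sqr_lt x e : 0 < e -> x * x < e * e -> Rabs x < e.
Proof. intros He H. unfold Rabs; destruct Rcase_abs; nra. Qed.

Lemma inv_INR_succ_small eps : 0 < eps -> exists N, forall n, (N <= n)%nat -> / (INR n + 1) < eps.
Proof.
  intros He. destruct (RinvN_cv He) as [N HN]. exists N. intros n Hn.
  specialize (HN n Hn). unfold Rdist in HN. simpl in HN.
  rewrite Rminus_0_r, Rabs_right in HN; auto. apply Rle_ge, Rlt_le, RinvN_pos.
Qed.

Lemma quadratic_bound_linear_coeff0 C K : 0 <= K -> (forall t, 2 * t * C <= t * t * K) -> C = 0.
Proof.
  intros HK H. specialize (H (C / (K + 1))).
  assert (E : C / (K + 1) * (C / (K + 1)) * K = (C * C * K / (K + 1)) / (K + 1)) by (field; lra).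
  rewrite E in H. apply Rmult_le_compat_r with (r := K + 1) in H; [|lra].
  replace (2 * (C / (K + 1)) * C * (K + 1)) with (2 * C * C) in H by (field; lra).
  replace (C * C * K / (K + 1) / (K + 1) * (K + 1)) with (C * C * (K / (K + 1))) in H by (field; lra).
  assert (K / (K + 1) <= 1).
  { apply Rmult_le_reg_r with (K + 1); [lra|]. unfold Rdiv. rewrite Rmult_assoc, Rinv_l; lra. }
  pose proof (Rle_0_sqr C). unfold Rsqr in *. nra.
Qed.

(** * Unconditional sums *)

Definition sum_list {I : Type} (f : I -> R) (l : list I) : R :=
  fold_right (fun i acc => f i + acc) 0 l.

Definition has_sum {I : Type} (f : I -> R) (s : R) : Prop :=
  forall eps, 0 < eps -> exists l0 : list I,
    forall l, NoDup l -> incl l0 l -> Rabs (sum_list f l - s) < eps.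

Definition summable {I : Type} (f : I -> R) : Prop := exists s, has_sum f s.

Section FiniteSums.
Context {I : Type}.
Implicit Types (f g : I -> R) (l : list I).

Lemma sum_list_app f l1 l2 : sum_list f (l1 ++ l2) = sum_list f l1 + sum_list f l2.
Proof. induction l1; simpl; lra. Qed.

Lemma sum_list_perm f l l' : Permutation l l' -> sum_list f l = sum_list f l'.
Proof. induction 1; simpl; lra. Qed.

Lemma sum_list_ext f g l : (forall i, In i l -> f i = g i) -> sum_list f l = sum_list g l.
Proof. induction l; simpl; intros H; auto. rewrite H, IHl; auto. Qed.

Lemma sum_list_plus f g l : sum_list (fun i => f i + g i) l = sum_list f l + sum_list g l.
Proof. induction l; simpl; lra. Qed.

Lemma sum_list_scal a f l : sum_list (fun i => a * f i) l = a * sum_list f l.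
Proof. induction l; simpl; lra. Qed.

Lemma sum_list_minus f g l : sum_list (fun i => f i - g i) l = sum_list f l - sum_list g l.
Proof. induction l; simpl; lra. Qed.

Lemma sum_list_zero l : sum_list (fun _ : I => 0) l = 0.
Proof. induction l; simpl; lra. Qed.

Lemma sum_list_nonneg f l : (forall i, 0 <= f i) -> 0 <= sum_list f l.
Proof. intros H; induction l; simpl; [lra|]. specialize (H a); lra. Qed.

Lemma sum_list_le f g l : (forall i, f i <= g i) -> sum_list f l <= sum_list g l.
Proof. intros H; induction l; simpl; [lra|]. specialize (H a); lra. Qed.

Lemma sum_list_filter f (P : I -> bool) l :
  sum_list f l = sum_list f (filter P l) + sum_list f (filter (fun i => negb (P i)) l).
Proof. induction l; simpl; [lra|]. destruct (P a); simpl; lra. Qed.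

Lemma sum_list_filter_In f l0 l : NoDup l0 -> NoDup l -> incl l0 l ->
  sum_list f l = sum_list f l0 + sum_list f (filter (fun i => negb (asbool (In i l0))) l).
Proof.
  intros H0 Hl Hinc. rewrite (sum_list_filter f (fun i => asbool (In i l0)) l).
  f_equal. apply sum_list_perm, NoDup_Permutation; [apply NoDup_filter; auto|auto|].
  intros x; rewrite filter_In, asboolT; intuition.
Qed.

Lemma sum_list_support f F l : NoDup F -> NoDup l -> incl F l ->
  (forall i, ~ In i F -> f i = 0) -> sum_list f l = sum_list f F.
Proof.
  intros HF Hl Hinc H0. rewrite (sum_list_filter_In f F l) by auto.
  rewrite (sum_list_ext f (fun _ => 0) (filter _ l)), sum_list_zero; [lra|].
  intros i Hi. apply filter_In in Hi as [_ Hi].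
  apply H0. intros HiF. apply asboolT in HiF. rewrite HiF in Hi. discriminate.
Qed.

Lemma sum_list_incl_le f l0 l : (forall i, 0 <= f i) -> NoDup l0 -> NoDup l -> incl l0 l ->
  sum_list f l0 <= sum_list f l.
Proof.
  intros Hnn H0 Hl Hinc. rewrite (sum_list_filter_In f l0 l) by auto.
  pose proof (sum_list_nonneg f (filter (fun i => negb (asbool (In i l0))) l) Hnn). lra.
Qed.

Definition nodup_list l : list I := nodup classic_eq_dec l.

Lemma nodup_list_NoDup l : NoDup (nodup_list l).
Proof. apply NoDup_nodup. Qed.

Lemma incl_nodup_list_app_l l1 l2 : incl l1 (nodup_list (l1 ++ l2)).
Proof. intros x Hx. apply nodup_In, in_or_app; auto. Qed.

Lemma incl_nodup_list_app_r l1 l2 : incl l2 (nodup_list (l1 ++ l2)).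
Proof. intros x Hx. apply nodup_In, in_or_app; auto. Qed.

End FiniteSums.

Section UnconditionalSums.
Context {I : Type}.
Implicit Types (f g : I -> R) (l : list I).

Lemma has_sum_unique f s t : has_sum f s -> has_sum f t -> s = t.
Proof.
  intros Hs Ht. apply Rle_antisym; apply Rnot_lt_le; intro Hlt;
  [ destruct (Hs ((s - t)/2)) as [l1 H1]; [lra|]; destruct (Ht ((s - t)/2)) as [l2 H2]; [lra|]
  | destruct (Hs ((t - s)/2)) as [l1 H1]; [lra|]; destruct (Ht ((t - s)/2)) as [l2 H2]; [lra|] ];
  specialize (H1 _ (nodup_list_NoDup _) (incl_nodup_list_app_l l1 l2));
  specialize (H2 _ (nodup_list_NoDup _) (incl_nodup_list_app_r l1 l2));
  apply Rabs_def2 in H1; apply Rabs_def2 in H2; lra.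
Qed.

Lemma has_sum_ext f g s : (forall i, f i = g i) -> has_sum f s -> has_sum g s.
Proof.
  intros E H eps He; destruct (H eps He) as [l0 Hl0]; exists l0; intros l Hl Hi.
  rewrite <- (sum_list_ext f g); auto.
Qed.

Lemma has_sum_plus f g s t : has_sum f s -> has_sum g t -> has_sum (fun i => f i + g i) (s + t).
Proof.
  intros Hs Ht eps He.
  destruct (Hs (eps/2)) as [l1 H1]; [lra|]. destruct (Ht (eps/2)) as [l2 H2]; [lra|].
  exists (l1 ++ l2). intros l Hl [Hinc1 Hinc2]%incl_app_inv.
  specialize (H1 l Hl Hinc1). specialize (H2 l Hl Hinc2). rewrite sum_list_plus.
  apply Rabs_def2 in H1; apply Rabs_def2 in H2. apply Rabs_def1; lra.
Qed.

Lemma has_sum_scal a f s : has_sum f s -> has_sum (fun i => a * f i) (a * s).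
Proof.
  intros Hs eps He. pose proof (Rabs_pos a).
  destruct (Hs (eps / (Rabs a + 1))) as [l0 H0]; [apply Rdiv_lt_0_compat; lra|].
  exists l0; intros l Hl Hinc. specialize (H0 l Hl Hinc).
  rewrite sum_list_scal, <- Rmult_minus_distr_l, Rabs_mult.
  apply Rle_lt_trans with (Rabs a * (eps / (Rabs a + 1))); [apply Rmult_le_compat_l; lra|].
  apply Rmult_lt_reg_l with (Rabs a + 1); [lra|].
  replace ((Rabs a + 1) * (Rabs a * (eps / (Rabs a + 1)))) with (Rabs a * eps) by (field; lra).
  nra.
Qed.

Lemma has_sum_opp f s : has_sum f s -> has_sum (fun i => - f i) (- s).
Proof.
  intros H. replace (- s) with (-1 * s) by ring.
  apply has_sum_ext with (fun i => -1 * f i); [intros; ring|]. apply has_sum_scal; auto.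
Qed.

Lemma has_sum_minus f g s t : has_sum f s -> has_sum g t -> has_sum (fun i => f i - g i) (s - t).
Proof. intros. apply has_sum_plus; auto. apply has_sum_opp; auto. Qed.

Lemma has_sum_zero : has_sum (fun _ : I => 0) 0.
Proof. intros eps He; exists []; intros. rewrite sum_list_zero, Rminus_0_r, Rabs_R0; auto. Qed.

Lemma has_sum_finite f F : NoDup F -> (forall i, ~ In i F -> f i = 0) -> has_sum f (sum_list f F).
Proof.
  intros HF H0 eps He. exists F. intros l Hl Hinc.
  rewrite (sum_list_support f F l); auto. rewrite Rminus_diag, Rabs_R0; auto.
Qed.

Lemma has_sum_sum_list {J : Type} (F : J -> I -> R) (S : J -> R) (ys : list J) :
  (forall y, In y ys -> has_sum (F y) (S y)) ->
  has_sum (fun x => sum_list (fun y => F y x) ys) (sum_list S ys).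
Proof. induction ys; simpl; intros H; [apply has_sum_zero|]. apply has_sum_plus; auto. Qed.

Lemma sum_list_le_has_sum f s l : (forall i, 0 <= f i) -> has_sum f s -> NoDup l -> sum_list f l <= s.
Proof.
  intros Hnn Hs Hl. apply Rnot_lt_le; intro Hlt.
  destruct (Hs (sum_list f l - s)) as [l0 H0]; [lra|].
  specialize (H0 _ (nodup_list_NoDup _) (incl_nodup_list_app_r l l0)).
  pose proof (sum_list_incl_le f l _ Hnn Hl (nodup_list_NoDup _) (incl_nodup_list_app_l l l0)).
  apply Rabs_def2 in H0. lra.
Qed.

Lemma has_sum_nonneg f s : (forall i, 0 <= f i) -> has_sum f s -> 0 <= s.
Proof. intros. apply (sum_list_le_has_sum f s [] H H0 (NoDup_nil _)). Qed.

Lemma has_sum_term_le f s i : (forall i, 0 <= f i) -> has_sum f s -> f i <= s.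
Proof.
  intros Hnn Hs. pose proof (sum_list_le_has_sum f s [i] Hnn Hs (NoDup_cons _ (in_nil (a:=i)) (NoDup_nil _))).
  simpl in *; lra.
Qed.

Lemma has_sum_le f g s t : (forall i, f i <= g i) -> has_sum f s -> has_sum g t -> s <= t.
Proof.
  intros Hle Hs Ht. apply Rnot_lt_le; intro Hlt.
  destruct (Hs ((s - t)/2)) as [l1 H1]; [lra|]; destruct (Ht ((s - t)/2)) as [l2 H2]; [lra|].
  specialize (H1 _ (nodup_list_NoDup _) (incl_nodup_list_app_l l1 l2)).
  specialize (H2 _ (nodup_list_NoDup _) (incl_nodup_list_app_r l1 l2)).
  pose proof (sum_list_le f g (nodup_list (l1 ++ l2)) Hle).
  apply Rabs_def2 in H1; apply Rabs_def2 in H2; lra.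
Qed.

(* The sum is the supremum of the finite partial sums. *)
Lemma has_sum_of_bounded f B : (forall i, 0 <= f i) -> (forall l, NoDup l -> sum_list f l <= B) ->
  exists s, has_sum f s /\ s <= B.
Proof.
  intros Hnn HB.
  set (E := fun r => exists l, NoDup l /\ r = sum_list f l).
  assert (bE : bound E) by (exists B; intros r [l [Hl ->]]; auto).
  assert (nE : exists r, E r) by (exists 0, []; split; [constructor|reflexivity]).
  destruct (completeness E bE nE) as [s [Hub Hlub]].
  exists s; split; [|apply Hlub; intros r [l [Hl ->]]; auto].
  intros eps He.
  assert (Happrox : exists l, NoDup l /\ s - eps < sum_list f l).
  { apply NNPP; intro Hn. enough (s <= s - eps) by lra. apply Hlub. intros r [l [Hl ->]].
    apply Rnot_lt_le; intro; apply Hn; exists l; auto. }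
  destruct Happrox as [l0 [Hl0 Hlt]]. exists l0. intros l Hl Hinc.
  pose proof (sum_list_incl_le f l0 l Hnn Hl0 Hl Hinc).
  assert (sum_list f l <= s) by (apply Hub; exists l; auto).
  apply Rabs_def1; lra.
Qed.

Lemma has_sum_dominated f g t : (forall i, 0 <= f i <= g i) -> has_sum g t ->
  exists s, has_sum f s /\ s <= t.
Proof.
  intros H Hg. apply has_sum_of_bounded; [intros i; apply H|].
  intros l Hl. apply Rle_trans with (sum_list g l); [apply sum_list_le; apply H|].
  apply sum_list_le_has_sum; auto. intros i; specialize (H i); lra.
Qed.

Lemma summable_abs_dominated f g : (forall i, Rabs (f i) <= g i) -> summable g -> summable f.
Proof.
  intros H [t Ht].
  destruct (has_sum_dominated (fun i => (Rabs (f i) + f i) / 2) g t) as [s1 [H1 _]]; auto.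
  { intros i; specialize (H i). pose proof (Rle_abs (f i)).
    pose proof (Rle_abs (- f i)). rewrite Rabs_Ropp in *. lra. }
  destruct (has_sum_dominated (fun i => (Rabs (f i) - f i) / 2) g t) as [s2 [H2 _]]; auto.
  { intros i; specialize (H i). pose proof (Rle_abs (f i)).
    pose proof (Rle_abs (- f i)). rewrite Rabs_Ropp in *. lra. }
  exists (s1 - s2). eapply has_sum_ext; [|apply has_sum_minus; [exact H1|exact H2]].
  intros; simpl; field.
Qed.

End UnconditionalSums.

Section Reindexing.
Context {J I : Type} (e : J -> I) (e_inj : forall x y, e x = e y -> x = y).

Definition preimage_list (i : I) : list J :=
  match excluded_middle_informative (exists j, e j = i) with
  | left P => [proj1_sig (constructive_indefinite_description _ P)]
  | right _ => []
  end.

Lemma preimage_listP i j : In j (preimage_list i) <-> e j = i.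
Proof.
  unfold preimage_list. destruct excluded_middle_informative as [P|P].
  - destruct constructive_indefinite_description as [j' Hj']; simpl. split.
    + intros [<-|[]]; auto.
    + intros H; left. apply e_inj; congruence.
  - simpl; split; [intros []|]. intros H; apply P; eauto.
Qed.

Lemma has_sum_reindex (g : J -> R) (F : I -> R) s :
  has_sum g s -> (forall j, F (e j) = g j) -> (forall i, (~ exists j, e j = i) -> F i = 0) ->
  has_sum F s.
Proof.
  intros Hg HFe HF0 eps He. destruct (Hg eps He) as [l0 H0].
  exists (map e l0). intros l Hl Hinc.
  set (l' := flat_map preimage_list l).
  assert (Esum : sum_list F l = sum_list g l').
  { unfold l'; clear Hl Hinc. induction l as [|i l IH]; simpl; auto.
    rewrite sum_list_app, IH. f_equal. unfold preimage_list.
    destruct excluded_middle_informative as [P|P].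
    - destruct constructive_indefinite_description as [j' Hj']; simpl. subst; rewrite HFe; ring.
    - simpl. rewrite HF0; auto; ring. }
  assert (ND : NoDup l').
  { unfold l'; clear Hinc Esum. induction Hl as [|i l Hni Hl IH]; simpl; [constructor|].
    apply NoDup_app; auto.
    - unfold preimage_list; destruct excluded_middle_informative; repeat constructor; simpl; auto.
    - intros j Hj1 Hj2. apply preimage_listP in Hj1. apply in_flat_map in Hj2.
      destruct Hj2 as [i' [Hi' Hj']]. apply preimage_listP in Hj'. subst; congruence. }
  assert (Inc : incl l0 l').
  { intros j Hj. apply in_flat_map. exists (e j).
    split; [apply Hinc, in_map; auto|apply preimage_listP; auto]. }
  rewrite Esum. apply H0; auto.
Qed.

Lemma has_sum_restrict (F : I -> R) t : (forall i, 0 <= F i) -> has_sum F t ->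
  exists s, has_sum (fun j => F (e j)) s /\ s <= t.
Proof.
  intros Hnn HF. apply has_sum_of_bounded; auto.
  intros l Hl. replace (sum_list (fun j => F (e j)) l) with (sum_list F (map e l))
    by (clear; induction l; simpl; congruence).
  apply sum_list_le_has_sum; auto.
  apply (FinFun.Injective_map_NoDup (f := e)); [intros x y; apply e_inj|auto].
Qed.
End Reindexing.

Lemma has_sum_sum_type {A B : Type} (f : A -> R) (g : B -> R) s t :
  has_sum f s -> has_sum g t ->
  has_sum (fun i : A + B => match i with inl a => f a | inr b => g b end) (s + t).
Proof.
  intros Hf Hg.
  apply has_sum_ext with (fun i => match i with inl a => f a | inr _ => 0 end +
                                   match i with inl _ => 0 | inr b => g b end);
    [intros [a|b']; ring|].
  apply has_sum_plus.
  - apply (has_sum_reindex inl (fun a a' E => ltac:(now inversion E)) f); auto.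
    intros [a|b'] Hn; auto. exfalso; apply Hn; eauto.
  - apply (has_sum_reindex inr (fun a a' E => ltac:(now inversion E)) g); auto.
    intros [a|b'] Hn; auto. exfalso; apply Hn; eauto.
Qed.

(* A total version of the sum, with junk value [0] on non-summable families. *)
Definition tsum {I : Type} (f : I -> R) : R :=
  match excluded_middle_informative (summable f) with
  | left P => proj1_sig (constructive_indefinite_description _ P)
  | right _ => 0
  end.

Section TotalSums.
Context {I : Type}.
Implicit Types (f g : I -> R).

Lemma tsumP f : summable f -> has_sum f (tsum f).
Proof.
  intros H. unfold tsum. destruct excluded_middle_informative; [|contradiction].
  destruct constructive_indefinite_description; simpl; auto.
Qed.

Lemma tsum_eq f s : has_sum f s -> tsum f = s.
Proof. intros H. eapply has_sum_unique; [apply tsumP; exists s|]; eauto. Qed.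

Lemma summable_plus f g : summable f -> summable g -> summable (fun i => f i + g i).
Proof. intros [s Hs] [t Ht]; exists (s + t); apply has_sum_plus; auto. Qed.

Lemma summable_scal a f : summable f -> summable (fun i => a * f i).
Proof. intros [s Hs]; exists (a * s); apply has_sum_scal; auto. Qed.

Lemma summable_minus f g : summable f -> summable g -> summable (fun i => f i - g i).
Proof. intros [s Hs] [t Ht]; exists (s - t); apply has_sum_minus; auto. Qed.

Lemma summable_opp f : summable f -> summable (fun i => - f i).
Proof. intros [s Hs]; exists (- s); apply has_sum_opp; auto. Qed.

Lemma summable_ext f g : (forall i, f i = g i) -> summable f -> summable g.
Proof. intros E [s Hs]; exists s; eapply has_sum_ext; eauto. Qed.

Lemma tsum_plus f g : summable f -> summable g -> tsum (fun i => f i + g i) = tsum f + tsum g.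
Proof. intros Hf Hg. apply tsum_eq, has_sum_plus; apply tsumP; auto. Qed.

Lemma tsum_minus f g : summable f -> summable g -> tsum (fun i => f i - g i) = tsum f - tsum g.
Proof. intros Hf Hg. apply tsum_eq, has_sum_minus; apply tsumP; auto. Qed.

Lemma tsum_scal a f : summable f -> tsum (fun i => a * f i) = a * tsum f.
Proof. intros Hf. apply tsum_eq, has_sum_scal; apply tsumP; auto. Qed.

Lemma tsum_ext f g : (forall i, f i = g i) -> tsum f = tsum g.
Proof. intros E. f_equal. apply functional_extensionality; auto. Qed.

Lemma tsum_le f g : (forall i, f i <= g i) -> summable f -> summable g -> tsum f <= tsum g.
Proof. intros. eapply has_sum_le; eauto; apply tsumP; auto. Qed.

Lemma tsum_nonneg f : (forall i, 0 <= f i) -> 0 <= tsum f.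
Proof.
  intros H. unfold tsum. destruct excluded_middle_informative; [|lra].
  destruct constructive_indefinite_description; simpl. eapply has_sum_nonneg; eauto.
Qed.

Lemma tsum_term_le f i : (forall i, 0 <= f i) -> summable f -> f i <= tsum f.
Proof. intros. apply has_sum_term_le; auto. apply tsumP; auto. Qed.
End TotalSums.

(** * Square-summable families *)

Section SquareSummable.
Context {I : Type}.
Implicit Types (a b : I -> R).

Definition square_summable a : Prop := summable (fun i => a i * a i).
Definition sqnorm a : R := tsum (fun i => a i * a i).
Definition inner a b : R := tsum (fun i => a i * b i).
Definition l2_cv (A : nat -> I -> R) (Z : I -> R) : Prop :=
  forall eps, 0 < eps -> exists N, forall n, (N <= n)%nat -> sqnorm (fun i => A n i - Z i) <= eps.

Lemma square_summable_mult a b : square_summable a -> square_summable b -> summable (fun i => a i * b i).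
Proof.
  intros Ha Hb. apply summable_abs_dominated with (fun i => / 2 * (a i * a i + b i * b i)).
  - intros i. pose proof (Rle_0_sqr (a i - b i)). pose proof (Rle_0_sqr (a i + b i)).
    unfold Rsqr in *. apply Rabs_le. nra.
  - apply summable_scal, summable_plus; auto.
Qed.

Lemma square_summable_plus a b : square_summable a -> square_summable b -> square_summable (fun i => a i + b i).
Proof.
  intros Ha Hb. apply summable_ext with (fun i => a i * a i + (2 * (a i * b i) + b i * b i));
    [intros; ring|].
  apply summable_plus, summable_plus; auto. apply summable_scal, square_summable_mult; auto.
Qed.

Lemma square_summable_scal t a : square_summable a -> square_summable (fun i => t * a i).
Proof.
  intros Ha. apply summable_ext with (fun i => (t * t) * (a i * a i)); [intros; ring|].
  apply summable_scal; auto.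
Qed.

Lemma square_summable_ext a b : (forall i, a i = b i) -> square_summable a -> square_summable b.
Proof. intros E H; eapply summable_ext; [|exact H]. intros i; simpl; rewrite (E i); auto. Qed.

Lemma square_summable_minus a b : square_summable a -> square_summable b -> square_summable (fun i => a i - b i).
Proof.
  intros. apply square_summable_ext with (fun i => a i + -1 * b i); [intros; ring|].
  apply square_summable_plus, square_summable_scal; auto.
Qed.

Ltac solve_summable :=
  repeat first [ assumption | apply square_summable_mult; assumption
               | apply summable_plus | apply summable_minus | apply summable_scal
               | apply summable_opp ].

Lemma sqnorm_nonneg a : 0 <= sqnorm a.
Proof. apply tsum_nonneg; intros; apply Rle_0_sqr. Qed.

Lemma sqnorm_ge_coord a i : square_summable a -> a i * a i <= sqnorm a.
Proof. intros. apply (tsum_term_le (fun i => a i * a i)); auto. intros; apply Rle_0_sqr. Qed.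

Lemma sqnorm_ext a b : (forall i, a i = b i) -> sqnorm a = sqnorm b.
Proof. intros E; apply tsum_ext; intros i; rewrite E; auto. Qed.

Lemma sqnorm_minus_sym a b : sqnorm (fun i => a i - b i) = sqnorm (fun i => b i - a i).
Proof. apply tsum_ext; intros; ring. Qed.

Lemma tsum_abs_le f g : (forall i : I, Rabs (f i) <= g i) -> summable f -> summable g ->
  Rabs (tsum f) <= tsum g.
Proof.
  intros H Hf Hg. apply Rabs_le. split.
  - rewrite <- (Rmult_1_l (tsum g)), Ropp_mult_distr_l, <- tsum_scal by auto.
    apply tsum_le; [|apply summable_scal; auto|auto].
    intros i; specialize (H i); apply Rabs_le_inv in H; lra.
  - apply tsum_le; auto. intros i; specialize (H i); apply Rabs_le_inv in H; lra.
Qed.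

Lemma inner_abs_le a b lam : 0 < lam -> square_summable a -> square_summable b ->
  Rabs (inner a b) <= (lam * sqnorm a + sqnorm b / lam) / 2.
Proof.
  intros Hl Ha Hb. unfold inner, sqnorm.
  replace ((lam * tsum (fun i => a i * a i) + tsum (fun i => b i * b i) / lam) / 2)
    with (tsum (fun i => / 2 * (lam * (a i * a i) + / lam * (b i * b i)))).
  - apply tsum_abs_le; solve_summable.
    intros i. assert (0 < / lam) by (apply Rinv_0_lt_compat; auto).
    assert (lam * / lam = 1) by (field; lra).
    pose proof (Rle_0_sqr (lam * a i - b i)). pose proof (Rle_0_sqr (lam * a i + b i)).
    unfold Rsqr in *. apply Rabs_le. split; nra.
  - rewrite tsum_scal, tsum_plus, !tsum_scal; solve_summable. field; lra.
Qed.

Lemma sqnorm_plus_le a b : square_summable a -> square_summable b ->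
  sqnorm (fun i => a i + b i) <= 2 * sqnorm a + 2 * sqnorm b.
Proof.
  intros Ha Hb. unfold sqnorm. rewrite <- !tsum_scal, <- tsum_plus by solve_summable.
  apply tsum_le; [|apply square_summable_plus; auto|solve_summable].
  intros i. pose proof (Rle_0_sqr (a i - b i)). unfold Rsqr in *. nra.
Qed.

Lemma sqnorm_minus_scal a b t : square_summable a -> square_summable b ->
  sqnorm (fun i => a i - t * b i) = sqnorm a - 2 * t * inner a b + t * t * sqnorm b.
Proof.
  intros Ha Hb. unfold sqnorm, inner.
  rewrite (tsum_ext _ (fun i => (a i * a i - (2 * t) * (a i * b i)) + (t * t) * (b i * b i)))
    by (intros; ring).
  rewrite tsum_plus, tsum_minus, !tsum_scal; solve_summable. reflexivity.
Qed.

Lemma inner_minus_l a a' b : square_summable a -> square_summable a' -> square_summable b ->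
  inner (fun i => a i - a' i) b = inner a b - inner a' b.
Proof.
  intros. unfold inner. rewrite <- tsum_minus by solve_summable. apply tsum_ext; intros; ring.
Qed.

Lemma inner_plus_l a a' b : square_summable a -> square_summable a' -> square_summable b ->
  inner (fun i => a i + a' i) b = inner a b + inner a' b.
Proof.
  intros. unfold inner. rewrite <- tsum_plus by solve_summable. apply tsum_ext; intros; ring.
Qed.

Lemma inner_opp_r a b : square_summable a -> square_summable b ->
  inner a (fun i => - b i) = - inner a b.
Proof.
  intros. unfold inner.
  rewrite <- (Rmult_1_l (tsum (fun i => a i * b i))), Ropp_mult_distr_l, <- tsum_scal by solve_summable.
  apply tsum_ext; intros; ring.
Qed.

Lemma parallelogram_law a b : square_summable a -> square_summable b ->
  sqnorm (fun i => a i - b i) = 2 * sqnorm a + 2 * sqnorm b - 4 * sqnorm (fun i => (a i + b i) / 2).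
Proof.
  intros Ha Hb. unfold sqnorm.
  assert (Sp : summable (fun i => (a i + b i) * (a i + b i))) by (apply square_summable_plus; auto).
  rewrite (tsum_ext (fun i => (a i + b i) / 2 * ((a i + b i) / 2))
     (fun i => / 4 * ((a i + b i) * (a i + b i)))) by (intros; field).
  rewrite (tsum_ext (fun i => (a i - b i) * (a i - b i))
     (fun i => (2 * (a i * a i) + 2 * (b i * b i)) - ((a i + b i) * (a i + b i)))) by (intros; ring).
  rewrite tsum_minus, tsum_plus, !tsum_scal; solve_summable. field.
Qed.

Definition l2_cauchy (A : nat -> I -> R) : Prop :=
  forall eps, 0 < eps -> exists N, forall n k, (N <= n)%nat -> (N <= k)%nat ->
    sqnorm (fun i => A n i - A k i) <= eps.

Lemma sum_list_cv (F : nat -> I -> R) (G : I -> R) l :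
  (forall i, Un_cv (fun n => F n i) (G i)) -> Un_cv (fun n => sum_list (F n) l) (sum_list G l).
Proof. intros H. induction l; simpl; [apply Un_cv_const|]. apply CV_plus; auto. Qed.

Lemma l2_cauchy_pointwise A i : (forall n, square_summable (A n)) -> l2_cauchy A ->
  Cauchy_crit (fun n => A n i).
Proof.
  intros Hl2 HC eps He. destruct (HC (eps * eps / 2)) as [N HN]; [nra|].
  exists N. intros n k Hn Hk. apply Rabs_lt_of_sqr_lt; auto.
  pose proof (sqnorm_ge_coord (fun i => A n i - A k i) i (square_summable_minus _ _ (Hl2 n) (Hl2 k))).
  specialize (HN n k Hn Hk). simpl in *. nra.
Qed.

(* Fatou's lemma for the finite partial sums. *)
Lemma l2_cauchy_cv A Z : (forall n, square_summable (A n)) -> l2_cauchy A ->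
  (forall i, Un_cv (fun n => A n i) (Z i)) ->
  forall eps, 0 < eps -> exists N, forall n, (N <= n)%nat ->
    exists s, has_sum (fun i => (A n i - Z i) * (A n i - Z i)) s /\ s <= eps.
Proof.
  intros Hl2 HC HZ eps He. destruct (HC eps He) as [N HN]. exists N. intros n Hn.
  apply has_sum_of_bounded; [intros; apply Rle_0_sqr|]. intros l Hl.
  assert (Hcv : Un_cv (fun k => sum_list (fun i => (A n i - A k i) * (A n i - A k i)) l)
                      (sum_list (fun i => (A n i - Z i) * (A n i - Z i)) l)).
  { apply (sum_list_cv (fun k i => (A n i - A k i) * (A n i - A k i))). intros i.
    apply CV_mult; apply CV_minus; auto; apply Un_cv_const. }
  apply Rnot_lt_le; intro Hlt.
  destruct (Hcv (sum_list (fun i => (A n i - Z i) * (A n i - Z i)) l - eps)) as [K HK]; [lra|].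
  specialize (HK (max K N) (Nat.le_max_l _ _)). specialize (HN n (max K N) Hn (Nat.le_max_r _ _)).
  assert (sum_list (fun i => (A n i - A (max K N) i) * (A n i - A (max K N) i)) l <= eps).
  { eapply Rle_trans; [|exact HN]. apply sum_list_le_has_sum; auto; [intros; apply Rle_0_sqr|].
    apply tsumP, square_summable_minus; auto. }
  unfold Rdist in HK. apply Rabs_def2 in HK. lra.
Qed.

Lemma l2_complete (A : nat -> I -> R) : (forall n, square_summable (A n)) -> l2_cauchy A ->
  exists Z : I -> R, square_summable Z /\ (forall i, Un_cv (fun n => A n i) (Z i)) /\ l2_cv A Z.
Proof.
  intros Hl2 HC.
  set (Z := fun i => proj1_sig (R_complete _ (l2_cauchy_pointwise A i Hl2 HC))).
  assert (HZ : forall i, Un_cv (fun n => A n i) (Z i))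
    by (intros i; unfold Z; destruct R_complete; auto).
  pose proof (l2_cauchy_cv A Z Hl2 HC HZ) as Hbnd.
  exists Z; split; [|split; auto].
  - destruct (Hbnd 1) as [N HN]; [lra|]. destruct (HN N (le_n _)) as [s [Hs _]].
    apply square_summable_ext with (fun i => A N i - (A N i - Z i)); [intros; ring|].
    apply square_summable_minus; auto. exists s; auto.
  - intros eps He. destruct (Hbnd eps He) as [N HN]. exists N; intros n Hn.
    destruct (HN n Hn) as [s [Hs Hse]]. unfold sqnorm. rewrite (tsum_eq _ s Hs); auto.
Qed.

Lemma l2_cv_plus (A B : nat -> I -> R) (X Y : I -> R) : (forall n, square_summable (A n)) -> (forall n, square_summable (B n)) ->
  square_summable X -> square_summable Y -> l2_cv A X -> l2_cv B Y ->
  l2_cv (fun n i => A n i + B n i) (fun i => X i + Y i).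
Proof.
  intros HA HB HX HY CA CB eps He.
  destruct (CA (eps / 4)) as [N1 H1]; [lra|]. destruct (CB (eps / 4)) as [N2 H2]; [lra|].
  exists (max N1 N2). intros n Hn.
  rewrite (sqnorm_ext _ (fun i => (A n i - X i) + (B n i - Y i))) by (intros; ring).
  eapply Rle_trans; [apply sqnorm_plus_le; apply square_summable_minus; auto|].
  pose proof (H1 n ltac:(lia)). pose proof (H2 n ltac:(lia)). lra.
Qed.

Lemma l2_cv_ext_r (A : nat -> I -> R) (Z Z' : I -> R) : (forall i, Z i = Z' i) -> l2_cv A Z -> l2_cv A Z'.
Proof.
  intros E H eps He. destruct (H eps He) as [N HN]. exists N. intros n Hn.
  rewrite <- (sqnorm_ext (fun i => A n i - Z i)) by (intros; rewrite E; auto). auto.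
Qed.

Lemma l2_cv_shift (A : nat -> I -> R) (Z : I -> R) M : l2_cv A Z -> l2_cv (fun n => A (n + M)%nat) Z.
Proof. intros H eps He. destruct (H eps He) as [N HN]. exists N. intros n Hn. apply HN; lia. Qed.

Lemma l2_cv_cauchy (A : nat -> I -> R) (Z : I -> R) : (forall n, square_summable (A n)) -> square_summable Z -> l2_cv A Z -> l2_cauchy A.
Proof.
  intros HA HZ Hcv eps He. destruct (Hcv (eps / 4)) as [N HN]; [lra|].
  exists N. intros n k Hn Hk.
  rewrite (sqnorm_ext _ (fun i => (A n i - Z i) + (Z i - A k i))) by (intros; ring).
  eapply Rle_trans; [apply sqnorm_plus_le; apply square_summable_minus; auto|].
  rewrite (sqnorm_minus_sym Z). pose proof (HN n Hn). pose proof (HN k Hk). lra.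
Qed.

Lemma inner_small b : square_summable b -> forall e, 0 < e -> exists delta, 0 < delta /\
  forall a, square_summable a -> sqnorm a <= delta -> Rabs (inner a b) <= e.
Proof.
  intros Hb e He. pose proof (sqnorm_nonneg b).
  set (lam := (sqnorm b + 1) / e).
  assert (Hlam : 0 < lam) by (apply Rdiv_lt_0_compat; lra).
  exists (e / lam / 2). split; [apply Rdiv_lt_0_compat; [apply Rdiv_lt_0_compat|]; lra|].
  intros a Ha Hsmall. eapply Rle_trans; [apply inner_abs_le; eauto|].
  assert (lam * sqnorm a <= e / 2).
  { apply Rle_trans with (lam * (e / lam / 2)); [apply Rmult_le_compat_l; lra|].
    right; field; lra. }
  assert (sqnorm b / lam <= e).
  { unfold lam. replace (sqnorm b / ((sqnorm b + 1) / e)) with (e * (sqnorm b / (sqnorm b + 1)))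
      by (field; lra).
    rewrite <- (Rmult_1_r e) at 2. apply Rmult_le_compat_l; [lra|].
    apply Rmult_le_reg_r with (sqnorm b + 1); [lra|]. unfold Rdiv.
    rewrite Rmult_assoc, Rinv_l; lra. }
  lra.
Qed.

Lemma inner_cv A Z b : (forall n, square_summable (A n)) -> square_summable Z -> square_summable b ->
  l2_cv A Z -> Un_cv (fun n => inner (A n) b) (inner Z b).
Proof.
  intros HA HZ Hb Hcv eps He.
  destruct (inner_small b Hb (eps / 2)) as [delta [Hd Hsmall]]; [lra|].
  destruct (Hcv delta Hd) as [N HN]. exists N. intros n Hn. unfold Rdist.
  rewrite <- inner_minus_l by auto.
  apply Rle_lt_trans with (eps / 2); [|lra].
  apply Hsmall; auto. apply square_summable_minus; auto.
Qed.

Lemma inner_eq0_of_l2_cv A Z b : (forall n, square_summable (A n)) -> square_summable Z ->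
  square_summable b -> l2_cv A Z -> (forall n, inner (A n) b = 0) -> inner Z b = 0.
Proof.
  intros HA HZ Hb Hcv H0. pose proof (inner_cv A Z b HA HZ Hb Hcv) as Hlim.
  rewrite (functional_extensionality _ _ H0) in Hlim. eapply UL_sequence; eauto. apply Un_cv_const.
Qed.

(* Cauchy-Schwarz turns the hypothesis into [|P n|^2 <= |O n + P n|^2], which tends to [0]. *)
Lemma sqnorm_eq0_of_accretive_cv (P O : nat -> I -> R) H :
  square_summable H -> (forall n, square_summable (P n)) -> (forall n, square_summable (O n)) ->
  l2_cv P H -> l2_cv O (fun i => - H i) ->
  (forall n, sqnorm (P n) <= inner (fun i => O n i + P n i) (P n)) -> sqnorm H = 0.
Proof.
  intros HH HP HO CP CO Hacc.
  apply Rle_antisym; [|apply sqnorm_nonneg]. apply Rnot_lt_le; intro Hpos.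
  destruct (CP (sqnorm H / 20)) as [N1 H1]; [lra|]. destruct (CO (sqnorm H / 20)) as [N2 H2]; [lra|].
  set (n := max N1 N2). specialize (H1 n (Nat.le_max_l _ _)). specialize (H2 n (Nat.le_max_r _ _)).
  specialize (Hacc n).
  pose proof (inner_abs_le (fun i => O n i + P n i) (P n) 1 Rlt_0_1
    (square_summable_plus _ _ (HO n) (HP n)) (HP n)) as Hcs.
  apply Rabs_le_inv in Hcs. rewrite Rdiv_1_r, Rmult_1_l in Hcs.
  assert (HmH : square_summable (fun i => - H i))
    by (apply square_summable_ext with (fun i => -1 * H i); [intros; ring|apply square_summable_scal; auto]).
  assert (A : sqnorm (fun i => O n i + P n i) <=
              2 * sqnorm (fun i => O n i - - H i) + 2 * sqnorm (fun i => P n i - H i)).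
  { rewrite (sqnorm_ext (fun i => O n i + P n i) (fun i => (O n i - - H i) + (P n i - H i)))
      by (intros; ring).
    apply sqnorm_plus_le; apply square_summable_minus; auto. }
  assert (B : sqnorm H <= 2 * sqnorm (P n) + 2 * sqnorm (fun i => H i - P n i)).
  { rewrite (sqnorm_ext H (fun i => P n i + (H i - P n i))) at 1 by (intros; ring).
    apply sqnorm_plus_le; auto. apply square_summable_minus; auto. }
  rewrite sqnorm_minus_sym in B. lra.
Qed.
End SquareSummable.

(** * Projection onto the closure of a subspace *)

Section Projection.
Context {I : Type} (S : (I -> R) -> Prop) (F : I -> R).
Hypothesis F_l2 : square_summable F.
Hypothesis S_l2 : forall a, S a -> square_summable a.
Hypothesis S_lin : forall a a' t, S a -> S a' -> S (fun i => a i + t * a' i).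
Hypothesis S_0 : S (fun _ => 0).

Let dist2 (a : I -> R) : R := sqnorm (fun i => F i - a i).

Lemma minimizing_sequence_ex : exists d (A : nat -> I -> R),
  (forall a, S a -> d <= dist2 a) /\ (forall n, S (A n) /\ dist2 (A n) < d + / (INR n + 1)).
Proof.
  set (E := fun r => exists a, S a /\ r = - dist2 a).
  assert (bE : bound E) by (exists 0; intros r [a [_ ->]]; pose proof (sqnorm_nonneg (fun i => F i - a i)); unfold dist2; lra).
  assert (nE : exists r, E r) by (exists (- dist2 (fun _ => 0)), (fun _ => 0); auto).
  destruct (completeness E bE nE) as [M [HMub HMlub]].
  assert (Hex : forall n : nat, exists a, S a /\ dist2 a < - M + / (INR n + 1)).
  { intros n. pose proof (RinvN_pos n). apply NNPP; intro Hn.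
    enough (M <= M - / (INR n + 1)) by lra.
    apply HMlub. intros r [a [Ha ->]]. apply Rnot_lt_le; intro Hlt. apply Hn. exists a; split; auto; lra. }
  exists (- M), (fun n => proj1_sig (constructive_indefinite_description _ (Hex n))). split.
  - intros a Ha. enough (- dist2 a <= M) by lra. apply HMub; exists a; auto.
  - intros n; destruct constructive_indefinite_description; auto.
Qed.

Section MinimizingSequence.
Variable d : R.
Variable A : nat -> I -> R.
Hypothesis d_le : forall a, S a -> d <= dist2 a.
Hypothesis A_S : forall n, S (A n).
Hypothesis A_min : forall n, dist2 (A n) < d + / (INR n + 1).

Let res (n : nat) (i : I) : R := F i - A n i.

Lemma res_l2 n : square_summable (res n).
Proof. apply square_summable_minus; auto. Qed.

(* The midpoint of two residuals is again a residual, so by the parallelogram law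
   minimizing residuals cluster. *)
Lemma minimizing_cauchy : l2_cauchy res.
Proof.
  intros eps He. destruct (inv_INR_succ_small (eps / 4)) as [N HN]; [lra|].
  exists N. intros n k Hn Hk. unfold res.
  rewrite parallelogram_law by apply res_l2.
  assert (Hmid : d <= dist2 (fun i => A n i + / 2 * (A k i + -1 * A n i))) by auto.
  unfold dist2 in Hmid.
  rewrite (sqnorm_ext _ (fun i => (F i - A n i + (F i - A k i)) / 2)) in Hmid by (intros; field).
  pose proof (A_min n). pose proof (A_min k). pose proof (HN n Hn). pose proof (HN k Hk).
  unfold dist2 in *. lra.
Qed.

(* Minimality against [A n + t s] gives [2 t <res n, s> <= t^2 |s|^2 + 1/(n+1)]. *)
Lemma minimizing_limit_orthogonal Z s : square_summable Z -> l2_cv res Z -> S s -> inner Z s = 0.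
Proof.
  intros HZ Hcv Hs. pose proof (S_l2 s Hs) as Hs2.
  apply (quadratic_bound_linear_coeff0 _ (sqnorm s)); [apply sqnorm_nonneg|]. intros t.
  assert (Hle : forall n, 2 * t * inner (res n) s <= t * t * sqnorm s + / (INR n + 1)).
  { intros n. pose proof (d_le _ (S_lin (A n) s t (A_S n) Hs)) as Hd. pose proof (A_min n).
    unfold dist2 in *.
    rewrite (sqnorm_ext _ (fun i => res n i - t * s i)) in Hd by (intros; unfold res; ring).
    rewrite sqnorm_minus_scal in Hd by (auto; apply res_l2). unfold res in *. lra. }
  apply (Rle_cv_lim Hle).
  - apply CV_mult; [apply Un_cv_const|]. apply inner_cv; auto. apply res_l2.
  - pose proof (CV_plus _ _ _ _ (Un_cv_const (t * t * sqnorm s)) RinvN_cv) as Hc.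
    rewrite Rplus_0_r in Hc. exact Hc.
Qed.
End MinimizingSequence.

Lemma orthogonal_residual : exists (A : nat -> I -> R) (Z : I -> R),
  (forall n, S (A n)) /\ square_summable Z /\
  (forall i, Un_cv (fun n => F i - A n i) (Z i)) /\ l2_cv (fun n i => F i - A n i) Z /\
  (forall s, S s -> inner Z s = 0).
Proof.
  destruct minimizing_sequence_ex as [d [A [Hd HA]]].
  destruct (l2_complete (fun n i => F i - A n i)) as [Z [HZ [Hpt Hcv]]].
  - intros n. apply square_summable_minus; auto. apply S_l2, HA.
  - apply (minimizing_cauchy d); auto; apply HA.
  - exists A, Z. repeat split; auto; [apply HA|]. intros s Hs.
    apply (minimizing_limit_orthogonal d A); auto; apply HA.
Qed.
End Projection.

(** * Complex numbers *)

Lemma fst_Csum {I : Type} (F : I -> Cplx) l : fst (Csum F l) = sum_list (fun i => fst (F i)) l.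
Proof. induction l; simpl; auto. rewrite IHl; auto. Qed.

Lemma snd_Csum {I : Type} (F : I -> Cplx) l : snd (Csum F l) = sum_list (fun i => snd (F i)) l.
Proof. induction l; simpl; auto. rewrite IHl; auto. Qed.

Lemma Cnorm2_nonneg w : 0 <= Cnorm2 w.
Proof. unfold Cnorm2. pose proof (Rle_0_sqr (fst w)); pose proof (Rle_0_sqr (snd w)). unfold Rsqr in *. lra. Qed.

Lemma Cnorm_le w : Cnorm w <= Rabs (fst w) + Rabs (snd w).
Proof.
  unfold Cnorm, Cnorm2. pose proof (Rabs_pos (fst w)); pose proof (Rabs_pos (snd w)).
  rewrite <- (sqrt_square (Rabs (fst w) + Rabs (snd w))) by lra. apply sqrt_le_1_alt.
  pose proof (Rsqr_abs (fst w)); pose proof (Rsqr_abs (snd w)). unfold Rsqr in *. nra.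
Qed.

Definition Cpart (k : bool) (z : Cplx) : R := if k then fst z else snd z.

Lemma Cpart_sub k a w : Cpart k (Csub a w) = Cpart k a - Cpart k w.
Proof. destruct k; simpl; ring. Qed.

Lemma Cpart_add k a w : Cpart k (Cadd a w) = Cpart k a + Cpart k w.
Proof. destruct k; simpl; ring. Qed.

Lemma Cpart_scale k r a : Cpart k (Cscale r a) = r * Cpart k a.
Proof. destruct k; simpl; ring. Qed.

Lemma Cpart_C0 k : Cpart k C0 = 0.
Proof. destruct k; reflexivity. Qed.

Lemma Cpart_sqr_le k w : Cpart k w * Cpart k w <= Cnorm2 w.
Proof.
  unfold Cnorm2; pose proof (Rle_0_sqr (fst w)); pose proof (Rle_0_sqr (snd w)).
  unfold Rsqr in *. destruct k; simpl; lra.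
Qed.

Lemma Cpart_abs_le k w : Rabs (Cpart k w) <= Cnorm w.
Proof.
  unfold Cnorm. rewrite <- sqrt_Rsqr_abs. apply sqrt_le_1_alt. apply Cpart_sqr_le.
Qed.

Lemma Cpart_neq0 z : z <> C0 -> exists k, Cpart k z <> 0.
Proof.
  intros H. destruct z as [x y]. destruct (Req_dec x 0) as [->|]; [|exists true; auto].
  destruct (Req_dec y 0) as [->|]; [exfalso; apply H; reflexivity|exists false; auto].
Qed.

Lemma HasSumC_has_sum {I : Type} (F : I -> Cplx) z :
  HasSumC F z <-> forall k, has_sum (fun i => Cpart k (F i)) (Cpart k z).
Proof.
  split.
  - intros H k eps He; destruct (H eps He) as [l0 Hl0]; exists l0; intros l Hl Hi.
    eapply Rle_lt_trans; [|exact (Hl0 l Hl Hi)].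
    pose proof (Cpart_abs_le k (Csub (Csum F l) z)) as Q. rewrite Cpart_sub in Q.
    destruct k; simpl in *; [rewrite fst_Csum in Q|rewrite snd_Csum in Q]; exact Q.
  - intros H eps He.
    destruct (H true (eps/2)) as [l1 L1]; [lra|]. destruct (H false (eps/2)) as [l2 L2]; [lra|].
    exists (l1 ++ l2). intros l Hl [Hi1 Hi2]%incl_app_inv.
    specialize (L1 l Hl Hi1). specialize (L2 l Hl Hi2). simpl in L1, L2.
    eapply Rle_lt_trans; [apply Cnorm_le|]. simpl. rewrite fst_Csum, snd_Csum. unfold Rminus in *. lra.
Qed.

Lemma HasSumR_has_sum {I : Type} (f : I -> R) s : HasSumR f s <-> has_sum f s.
Proof.
  unfold HasSumR. rewrite HasSumC_has_sum. split; [intros H; apply (H true)|].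
  intros H [|]; simpl; [exact H|apply has_sum_zero].
Qed.

Lemma C_cv_Cpart k (zs : nat -> Cplx) z : C_converges_to zs z -> Un_cv (fun n => Cpart k (zs n)) (Cpart k z).
Proof.
  intros H eps He. destruct (H eps He) as [N HN]. exists N; intros n Hn.
  unfold Rdist. rewrite <- Cpart_sub. eapply Rle_lt_trans; [apply Cpart_abs_le|]. apply HN; auto.
Qed.

(** * Boundary values *)

Definition finsupp {V : Type} (g : V -> R) : Prop := exists l, forall x, ~ In x l -> g x = 0.

Section BoundaryValues.
Context (V : Type) (b : V -> V -> R).

Definition boundary_sequence (xs : nat -> V) : Prop :=
  d_cauchy V b xs /\ ~ (exists x, d_converges_to V b xs x).

Definition edge_cauchy (phi : nat -> V -> R) : Prop :=
  forall eps, 0 < eps -> exists N, forall n k, (N <= n)%nat -> (N <= k)%nat -> forall x y,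
    b x y * (((phi n x - phi k x) - (phi n y - phi k y)) * ((phi n x - phi k x) - (phi n y - phi k y))) <= eps.

Section Lipschitz.
Variables (g : V -> R) (eps : R).
Hypothesis g_energy : forall x y, b x y * ((g x - g y) * (g x - g y)) <= eps.

Lemma edge_variation_le x z : 0 < b x z -> Rabs (g x - g z) <= sqrt eps * / sqrt (b x z).
Proof.
  intros Hb. pose proof (sqrt_lt_R0 _ Hb) as Hs.
  apply Rmult_le_reg_r with (sqrt (b x z)); auto.
  rewrite Rmult_assoc, Rinv_l, Rmult_1_r by lra.
  rewrite <- sqrt_Rsqr_abs, <- sqrt_mult by (try apply Rle_0_sqr; lra).
  apply sqrt_le_1_alt. unfold Rsqr. rewrite Rmult_comm. apply g_energy.
Qed.

Lemma path_variation_le x l y : is_path V b x l y -> Rabs (g x - g y) <= sqrt eps * path_length V b x l.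
Proof.
  induction 1 as [x|x z l y Hb P IH]; simpl.
  - rewrite Rminus_diag, Rabs_R0; lra.
  - replace (g x - g y) with ((g x - g z) + (g z - g y)) by ring.
    eapply Rle_trans; [apply Rabs_triang|]. rewrite Rmult_plus_distr_l.
    apply Rplus_le_compat; auto. apply edge_variation_le; auto.
Qed.

Lemma dist_variation_le x y r : dist_le V b x y r -> Rabs (g x - g y) <= sqrt eps * (r + 1).
Proof.
  intros Hd. destruct (Hd 1) as [l [P Hl]]; [lra|].
  eapply Rle_trans; [apply (path_variation_le _ _ _ P)|].
  apply Rmult_le_compat_l; [apply sqrt_pos|lra].
Qed.
End Lipschitz.

Lemma boundary_sequence_eventually_notin xs : boundary_sequence xs ->
  forall l, exists M, forall n, (M <= n)%nat -> ~ In (xs n) l.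
Proof.
  intros [HC HN] l. induction l as [|x l [M HM]]; [exists 0%nat; intros n _ []|].
  assert (Hx : exists M', forall n, (M' <= n)%nat -> xs n <> x).
  { apply NNPP; intro Hn. apply HN. exists x. intros eps He.
    destruct (HC eps He) as [N HNc]. exists N. intros n Hn'.
    apply NNPP; intro Hd. apply Hn. exists N. intros k Hk Hkx.
    apply Hd. rewrite <- Hkx. apply HNc; auto. }
  destruct Hx as [M' HM']. exists (max M M'). intros n Hn [E|E].
  - apply (HM' n); auto. lia.
  - apply (HM n); auto. lia.
Qed.

(* The functions [phi n] vanish far out along [xs] and are uniformly Lipschitz
   for [d] near a fixed point [xs N1], so their pointwise limit tends to [0]. *)
Lemma Cc_limit_vanishes_at_boundary (xs : nat -> V) (phi : nat -> V -> R) (u : V -> R) :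
  boundary_sequence xs -> (forall n, finsupp (phi n)) ->
  (forall x, Un_cv (fun n => phi n x) (u x)) -> edge_cauchy phi ->
  Un_cv (fun n => u (xs n)) 0.
Proof.
  intros Hxs Hsupp Hcv Hedge eta Heta.
  set (q := eta / 5).
  destruct (proj1 Hxs 1) as [N1 HN1]; [lra|].
  set (y0 := xs N1).
  assert (Hq : 0 < (q / 2) * (q / 2)) by (unfold q; nra).
  destruct (Hedge _ Hq) as [N2 HN2].
  destruct (Hcv y0 q) as [N3 HN3]; [unfold q; lra|].
  set (Nn := max N2 N3).
  destruct (Hsupp Nn) as [L HL].
  destruct (boundary_sequence_eventually_notin xs Hxs L) as [M HM].
  exists (max M N1). intros n Hn. unfold Rdist; rewrite Rminus_0_r.
  destruct (Hcv (xs n) q) as [K1 HK1]; [unfold q; lra|].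
  set (k := max (max K1 N3) Nn).
  assert (Hg : Rabs ((phi Nn (xs n) - phi k (xs n)) - (phi Nn y0 - phi k y0)) <= q).
  { eapply Rle_trans.
    - apply (dist_variation_le (fun x => phi Nn x - phi k x) ((q / 2) * (q / 2))).
      + intros x y; apply HN2; unfold Nn, k; lia.
      + apply HN1; unfold y0; lia.
    - rewrite sqrt_square by (unfold q; lra). lra. }
  assert (H0 : phi Nn (xs n) = 0) by (apply HL, HM; lia).
  assert (A1 : Rabs (phi k (xs n) - u (xs n)) < q) by (apply HK1; unfold k; lia).
  assert (A2 : Rabs (phi Nn y0 - u y0) < q) by (apply HN3; unfold Nn; lia).
  assert (A3 : Rabs (phi k y0 - u y0) < q) by (apply HN3; unfold k, Nn; lia).
  rewrite H0 in Hg.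
  apply Rabs_def2 in A1; apply Rabs_def2 in A2; apply Rabs_def2 in A3.
  apply Rabs_le_inv in Hg. apply Rabs_def1; unfold q in *; lra.
Qed.
End BoundaryValues.

Section DirichletBoundary.
Context (V : Type) (m : V -> R) (Hm : forall x, 0 < m x) (b : V -> V -> R) (c : V -> R)
  (Hb_nonneg : forall x y, 0 <= b x y) (Hc : forall x, 0 <= c x).

Lemma l2_converges_pointwise k (us : nat -> V -> Cplx) u :
  l2_converges_to V m us u -> forall x, Un_cv (fun n => Cpart k (us n x)) (Cpart k (u x)).
Proof.
  intros H x eta He. pose proof (Hm x).
  assert (Hpos : 0 < eta * eta * m x) by (apply Rmult_lt_0_compat; nra).
  destruct (H (eta * eta * m x / 2)) as [N HN]; [lra|].
  exists N. intros n Hn. destruct (HN n Hn) as [s [Hs Hse]]. apply HasSumR_has_sum in Hs.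
  pose proof (has_sum_term_le _ s x (fun i => Rmult_le_pos _ _ (Cnorm2_nonneg _) (Rlt_le _ _ (Hm i))) Hs).
  pose proof (Cpart_sqr_le k (Csub (us n x) (u x))). rewrite Cpart_sub in *.
  unfold Rdist. apply Rabs_lt_of_sqr_lt; auto. simpl in *. nra.
Qed.

Lemma energy_edge_le u s x y : energy_is V b c u s -> b x y * Cnorm2 (Csub (u x) (u y)) <= 2 * s.
Proof.
  intros [s1 [s2 [H1 [H2 ->]]]]. apply HasSumR_has_sum in H1. apply HasSumR_has_sum in H2.
  pose proof (has_sum_term_le _ s1 (x, y) (fun p => Rmult_le_pos _ _ (Hb_nonneg _ _) (Cnorm2_nonneg _)) H1).
  pose proof (has_sum_nonneg _ s2 (fun p => Rmult_le_pos _ _ (Hc _) (Cnorm2_nonneg _)) H2).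
  simpl in *. lra.
Qed.

Lemma approx_seq_vanishes_at_boundary phis u xs k :
  approx_seq V m b c phis u -> boundary_sequence V b xs -> Un_cv (fun n => Cpart k (u (xs n))) 0.
Proof.
  intros [Hcc [Hcv Hen]] Hxs.
  apply (Cc_limit_vanishes_at_boundary V b xs (fun n x => Cpart k (phis n x)) (fun x => Cpart k (u x))); auto.
  - intros n. destruct (Hcc n) as [l Hl]. exists l. intros x Hx. rewrite Hl; auto. apply Cpart_C0.
  - intros x. apply l2_converges_pointwise; auto.
  - intros eps He. destruct (Hen (eps/2)) as [N HN]; [lra|]. exists N. intros n k' Hn Hk x y.
    destruct (HN n k' Hn Hk) as [s [Hs Hse]].
    pose proof (energy_edge_le _ _ x y Hs).
    pose proof (Cpart_sqr_le k (Csub (Csub (phis n x) (phis k' x)) (Csub (phis n y) (phis k' y)))).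
    rewrite !Cpart_sub in *. pose proof (Hb_nonneg x y).
    eapply Rle_trans; [apply Rmult_le_compat_l; eauto|]. lra.
Qed.

Lemma boundary_value_nonzero_not_DQD f : boundary_value_nonzero V b f -> ~ DQD V m b c f.
Proof.
  intros [xs [HC [HN [z [Hz Hfz]]]]] [_ [phis Hap]].
  destruct (Cpart_neq0 z Hz) as [k Hk]. apply Hk.
  eapply UL_sequence; [apply C_cv_Cpart; eauto|].
  apply (approx_seq_vanishes_at_boundary phis); auto. split; auto.
Qed.
End DirichletBoundary.

(** * The form Hilbert space of [Q^(N) + 1] *)

Section FormHilbertSpace.
Context (V : Type) (m : V -> R) (b : V -> V -> R) (c : V -> R).
Hypothesis Hm : forall x, 0 < m x.
Hypothesis Hb_nonneg : forall x y, 0 <= b x y.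
Hypothesis Hb_diag : forall x, b x x = 0.
Hypothesis Hb_sym : forall x y, b x y = b y x.
Hypothesis Hb_sum : forall x, exists s, has_sum (fun y => b x y) s.
Hypothesis Hc : forall x, 0 <= c x.
Implicit Types (g h psi om fr : V -> R) (x y : V).

Definition edge_vertex : Type := ((V * V) + V)%type.

(* [sqnorm (qvec g) = Q(g) + |g|^2]: [qvec] embeds the form domain of [Q^(N) + 1]
   isometrically into [l^2(edge_vertex)], with the factor [1/2] of [Q^(N)] split
   evenly between the two orientations of every edge. *)
Definition qvec (g : V -> R) (i : edge_vertex) : R :=
  match i with
  | inl p => sqrt (b (fst p) (snd p) / 2) * (g (fst p) - g (snd p))
  | inr x => sqrt (c x + m x) * g x
  end.

Definition delta (x : V) (y : V) : R := if classic_eq_dec y x then 1 else 0.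

Lemma cm_pos x : 0 < c x + m x.
Proof. pose proof (Hc x); pose proof (Hm x); lra. Qed.

Lemma qvec_plus_scal g h t i : qvec (fun y => g y + t * h y) i = qvec g i + t * qvec h i.
Proof. destruct i; simpl; ring. Qed.

Lemma sqrt_mult_self_l r u v : 0 <= r -> sqrt r * u * (sqrt r * v) = r * (u * v).
Proof. intros Hr. rewrite <- (sqrt_sqrt r Hr) at 3. ring. Qed.

Lemma qvec_sqr_edge g p : qvec g (inl p) * qvec g (inl p) =
  / 2 * (b (fst p) (snd p) * ((g (fst p) - g (snd p)) * (g (fst p) - g (snd p)))).
Proof. simpl. rewrite sqrt_mult_self_l; [field|]. pose proof (Hb_nonneg (fst p) (snd p)); lra. Qed.

Lemma qvec_sqr_vertex g x : qvec g (inr x) * qvec g (inr x) = (c x + m x) * (g x * g x).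
Proof. simpl. apply sqrt_mult_self_l. pose proof (cm_pos x); lra. Qed.

Lemma qvec_edge_le g x y : square_summable (qvec g) ->
  b x y * ((g x - g y) * (g x - g y)) <= 2 * sqnorm (qvec g).
Proof.
  intros Hg. pose proof (sqnorm_ge_coord (qvec g) (inl (x, y)) Hg) as H.
  rewrite qvec_sqr_edge in H. simpl in H. lra.
Qed.

Lemma qvec_square_summable g s1 s2 :
  has_sum (fun p : V * V => b (fst p) (snd p) * ((g (fst p) - g (snd p)) * (g (fst p) - g (snd p)))) s1 ->
  has_sum (fun x => (c x + m x) * (g x * g x)) s2 -> square_summable (qvec g).
Proof.
  intros H1 H2. exists (/ 2 * s1 + s2).
  eapply has_sum_ext; [|apply has_sum_sum_type; [apply has_sum_scal; exact H1|exact H2]].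
  intros [p|x]; [rewrite qvec_sqr_edge|rewrite qvec_sqr_vertex]; reflexivity.
Qed.

Lemma has_sum_edges_at x (f : V -> R) s :
  has_sum f s -> has_sum (fun p : V * V => if classic_eq_dec (fst p) x then f (snd p) else 0) s.
Proof.
  intros H. apply (has_sum_reindex (fun y => (x, y)) (fun y y' E => f_equal snd E) f); auto.
  - intros y; simpl. destruct (classic_eq_dec x x); congruence.
  - intros [p q] Hn; simpl. destruct (classic_eq_dec p x); auto. subst; exfalso; apply Hn; eauto.
Qed.

Lemma has_sum_edges_to x (f : V -> R) s :
  has_sum f s -> has_sum (fun p : V * V => if classic_eq_dec (snd p) x then f (fst p) else 0) s.
Proof.
  intros H. apply (has_sum_reindex (fun y => (y, x)) (fun y y' E => f_equal fst E) f); auto.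
  - intros y; simpl. destruct (classic_eq_dec x x); congruence.
  - intros [p q] Hn; simpl. destruct (classic_eq_dec q x); auto. subst; exfalso; apply Hn; eauto.
Qed.

Lemma qvec_delta_square_summable x : square_summable (qvec (delta x)).
Proof.
  destruct (Hb_sum x) as [B HB].
  apply (qvec_square_summable (delta x) (B + B) (c x + m x)).
  - apply has_sum_ext with (fun p : V * V => (if classic_eq_dec (fst p) x then b x (snd p) else 0) +
                                             (if classic_eq_dec (snd p) x then b x (fst p) else 0)).
    + intros [p q]; unfold delta; simpl.
      destruct (classic_eq_dec p x); destruct (classic_eq_dec q x); subst;
        rewrite ?Hb_diag; try ring; rewrite Hb_sym; ring.
    + apply has_sum_plus; [apply has_sum_edges_at|apply has_sum_edges_to]; auto.
  - replace (c x + m x) with (sum_list (fun y => (c y + m y) * (delta x y * delta x y)) [x]).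
    + apply has_sum_finite; [repeat constructor; auto|].
      intros y Hy. unfold delta. destruct (classic_eq_dec y x); [subst; exfalso; apply Hy; left; auto|ring].
    + simpl. unfold delta; destruct (classic_eq_dec x x); [ring|congruence].
Qed.

Lemma finsupp_qvec_square_summable g : finsupp g -> square_summable (qvec g).
Proof.
  intros [l Hl]. revert g Hl. induction l as [|x0 l IH]; intros g Hl.
  - exists 0. apply has_sum_ext with (fun _ => 0); [|apply has_sum_zero].
    intros [[p q]|y]; simpl; rewrite !Hl by auto; ring.
  - set (g' := fun y => if classic_eq_dec y x0 then 0 else g y).
    assert (Hg' : square_summable (qvec g')).
    { apply IH. intros y Hy. unfold g'. destruct (classic_eq_dec y x0); auto.
      apply Hl. intros [E|E]; auto. }
    apply square_summable_ext with (fun i => qvec g' i + g x0 * qvec (delta x0) i).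
    + intros i. rewrite <- qvec_plus_scal.
      destruct i as [[p q]|y]; simpl; unfold g', delta; repeat destruct (classic_eq_dec _ x0); subst; ring.
    + apply square_summable_plus, square_summable_scal; auto. apply qvec_delta_square_summable.
Qed.

Lemma summable_edge_differences g x : square_summable (qvec g) ->
  summable (fun y => b x y * (g x - g y)).
Proof.
  intros Hg. destruct (Hb_sum x) as [B HB].
  destruct (has_sum_restrict (fun y => inl (x, y) : edge_vertex) (fun y y' E => ltac:(now inversion E))
    (fun i => qvec g i * qvec g i) (tsum (fun i => qvec g i * qvec g i))) as [t [Ht _]];
    [intros; apply Rle_0_sqr|apply tsumP; exact Hg|].
  apply summable_abs_dominated with (fun y => / 2 * b x y + qvec g (inl (x, y)) * qvec g (inl (x, y))).
  - intros y. rewrite qvec_sqr_edge. simpl. pose proof (Hb_nonneg x y).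
    rewrite Rabs_mult, (Rabs_right (b x y)) by lra.
    pose proof (Rle_0_sqr (Rabs (g x - g y) - 1)). pose proof (Rsqr_abs (g x - g y)).
    unfold Rsqr in *. nra.
  - apply summable_plus; [apply summable_scal; exists B; auto|exists t; auto].
Qed.

(* The inner product of the form with [delta x] is [m x ((L~ + 1) g)(x)]. *)
Lemma inner_qvec_delta g x : square_summable (qvec g) ->
  exists S, has_sum (fun y => b x y * (g x - g y)) S /\
    inner (qvec g) (qvec (delta x)) = S + (c x + m x) * g x.
Proof.
  intros Hg. destruct (summable_edge_differences g x Hg) as [S HS].
  exists S; split; auto.
  set (G := fun y => / 2 * (b x y * (g x - g y))).
  assert (HG : has_sum G (/ 2 * S)) by (apply has_sum_scal; auto).
  apply tsum_eq.
  replace (S + (c x + m x) * g x) with ((/ 2 * S + / 2 * S) +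
      sum_list (fun y => if classic_eq_dec y x then (c x + m x) * g x else 0) [x])
    by (simpl; destruct (classic_eq_dec x x); [field|congruence]).
  eapply has_sum_ext; [|apply has_sum_sum_type;
    [apply has_sum_plus; [apply (has_sum_edges_at x G)|apply (has_sum_edges_to x G)]; exact HG
    |apply has_sum_finite]].
  - intros [[p q]|y]; simpl; unfold G, delta.
    + rewrite sqrt_mult_self_l by (pose proof (Hb_nonneg p q); lra).
      destruct (classic_eq_dec p x); destruct (classic_eq_dec q x); subst;
        rewrite ?Hb_diag; try field; rewrite Hb_sym; field.
    + destruct (classic_eq_dec y x); subst; [|ring].
      rewrite sqrt_mult_self_l by (apply Rlt_le, cm_pos). ring.
  - repeat constructor; auto.
  - intros y Hy. destruct (classic_eq_dec y x); subst; [exfalso; apply Hy; left|]; auto.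
Qed.

Definition Lop (g w : V -> R) : Prop :=
  forall x, exists s, has_sum (fun y => b x y * (g x - g y)) s /\ w x = / m x * (s + c x * g x).

Lemma Lop_neg_eigen h : Lop h (fun x => - h x) <->
  forall y, exists s, has_sum (fun x => b y x * (h y - h x)) s /\ s + (c y + m y) * h y = 0.
Proof.
  split; intros H y; destruct (H y) as [s [Hs E]]; exists s; split; auto; pose proof (Hm y).
  - assert (m y * - h y = s + c y * h y) by (rewrite E; field; lra). lra.
  - replace (s + c y * h y) with (m y * - h y) by lra. field; lra.
Qed.

Lemma qvec_orthogonal_Lop_neg_eigen h : square_summable (qvec h) ->
  (forall y, inner (qvec h) (qvec (delta y)) = 0) -> Lop h (fun x => - h x).
Proof.
  intros Hh Horth. apply Lop_neg_eigen. intros y.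
  destruct (inner_qvec_delta h y Hh) as [s [Hs E]]. exists s; split; auto. rewrite <- E; auto.
Qed.

(* [sqrtm] is the isometry [l^2(V, m) -> l^2(V)]. *)
Definition sqrtm (g : V -> R) (x : V) : R := sqrt (m x) * g x.

Lemma sqrtm_mult g h x : sqrtm g x * sqrtm h x = m x * (g x * h x).
Proof. apply sqrt_mult_self_l, Rlt_le, Hm. Qed.

Lemma sqrtm_plus g h x : sqrtm g x + sqrtm h x = sqrtm (fun y => g y + h y) x.
Proof. unfold sqrtm; ring. Qed.

Lemma finsupp_NoDup (g : V -> R) : finsupp g -> exists F : list V, NoDup F /\ forall x, ~ In x F -> g x = 0.
Proof.
  intros [l Hl]. exists (nodup_list l). split; [apply nodup_list_NoDup|].
  intros x Hx; apply Hl. intros H; apply Hx, nodup_In; auto.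
Qed.

Lemma finsupp_delta_decomp (psi : V -> R) (F : list V) : NoDup F -> (forall x, ~ In x F -> psi x = 0) ->
  forall y, psi y = sum_list (fun x => psi x * delta x y) F.
Proof.
  intros HF H0 y. destruct (in_dec classic_eq_dec y F) as [Hy|Hy].
  - rewrite (sum_list_support (fun x => psi x * delta x y) [y] F); auto.
    + simpl; unfold delta; destruct (classic_eq_dec y y); [ring|congruence].
    + repeat constructor; auto.
    + intros x [<-|[]]; auto.
    + intros x Hx. unfold delta. destruct (classic_eq_dec y x); [subst; exfalso; apply Hx; left|ring]; auto.
  - rewrite H0, <- (sum_list_zero F) by auto. apply sum_list_ext. intros x Hx.
    unfold delta. destruct (classic_eq_dec y x); [subst; contradiction|ring].
Qed.

Lemma qvec_sum_list (psi : V -> R) (F : list V) i :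
  qvec (fun y => sum_list (fun x => psi x * delta x y) F) i = sum_list (fun x => psi x * qvec (delta x) i) F.
Proof.
  destruct i as [p|y]; simpl.
  - rewrite <- sum_list_minus, <- sum_list_scal. apply sum_list_ext; intros; ring.
  - rewrite <- sum_list_scal. apply sum_list_ext; intros; ring.
Qed.

Lemma sqnorm_sqrtm_le_qvec g : square_summable (qvec g) ->
  square_summable (sqrtm g) /\ sqnorm (sqrtm g) <= sqnorm (qvec g).
Proof.
  intros Hg. destruct (has_sum_restrict (fun x => inr x : edge_vertex) (fun x y E => ltac:(now inversion E))
    (fun i => qvec g i * qvec g i) (sqnorm (qvec g))) as [t [Ht Htn]];
    [intros; apply Rle_0_sqr|apply tsumP; auto|].
  assert (Hdom : forall x, 0 <= sqrtm g x * sqrtm g x <= qvec g (inr x) * qvec g (inr x)).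
  { intros x. rewrite sqrtm_mult, qvec_sqr_vertex. pose proof (Hm x); pose proof (Hc x).
    pose proof (Rle_0_sqr (g x)). unfold Rsqr in *. split; nra. }
  destruct (has_sum_dominated _ _ t Hdom Ht) as [s [Hs Hst]].
  split; [exists s; auto|]. unfold sqnorm at 1. rewrite (tsum_eq _ s Hs). lra.
Qed.

(* [<(L~ + 1) psi, psi> = Q(psi) + |psi|^2 >= |psi|^2] for finitely supported [psi]. *)
Lemma Lop_accretive psi om : finsupp psi -> Lop psi om ->
  sqnorm (sqrtm psi) <= inner (fun x => sqrtm om x + sqrtm psi x) (sqrtm psi).
Proof.
  intros Hcc Hlt. destruct (finsupp_NoDup _ Hcc) as [F [HF H0]].
  pose proof (finsupp_qvec_square_summable psi Hcc) as Hl2.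
  assert (Hpt : forall x, (sqrtm om x + sqrtm psi x) * sqrtm psi x =
                          psi x * inner (qvec psi) (qvec (delta x))).
  { intros x. rewrite sqrtm_plus. destruct (Hlt x) as [s [Hs Hom]].
    destruct (inner_qvec_delta psi x Hl2) as [s' [Hs' E]].
    rewrite sqrtm_mult, E, Hom, (has_sum_unique _ _ _ Hs Hs'). field. pose proof (Hm x); lra. }
  unfold inner at 1. rewrite (tsum_ext _ _ Hpt).
  rewrite (tsum_eq _ (sum_list (fun x => psi x * inner (qvec psi) (qvec (delta x))) F))
    by (apply has_sum_finite; auto; intros x Hx; rewrite (H0 x Hx); ring).
  replace (sum_list (fun x => psi x * inner (qvec psi) (qvec (delta x))) F) with (sqnorm (qvec psi)).
  { apply sqnorm_sqrtm_le_qvec; auto. }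
  unfold sqnorm. apply tsum_eq.
  eapply has_sum_ext; [|apply (has_sum_sum_list (fun x i => psi x * (qvec psi i * qvec (delta x) i)))].
  - intros i. simpl.
    rewrite (sum_list_ext _ (fun y => qvec psi i * (psi y * qvec (delta y) i))) by (intros; ring).
    rewrite sum_list_scal, <- qvec_sum_list. f_equal. f_equal.
    apply functional_extensionality; intros y; symmetry; apply finsupp_delta_decomp; auto.
  - intros y _. apply has_sum_scal, tsumP, square_summable_mult; auto. apply qvec_delta_square_summable.
Qed.

(* Green's formula: since [psi] is finitely supported the double sum may be
   exchanged, which moves [L~ + 1] from [psi] onto [h]. *)
Lemma Lop_green psi om h : Lop h (fun x => - h x) -> finsupp psi -> Lop psi om ->
  inner (fun x => sqrtm om x + sqrtm psi x) (sqrtm h) = 0.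
Proof.
  intros Hh Hcc Hlt. rewrite Lop_neg_eigen in Hh. destruct (finsupp_NoDup _ Hcc) as [F [HF H0]].
  set (B := fun x => tsum (fun y => b x y)).
  assert (HB : forall x, has_sum (fun y => b x y) (B x))
    by (intros x; apply tsumP; destruct (Hb_sum x) as [s Hs]; exists s; auto).
  set (Sh := fun y => tsum (fun x => b y x * (h y - h x))).
  assert (HSh : forall y, has_sum (fun x => b y x * (h y - h x)) (Sh y) /\ Sh y + (c y + m y) * h y = 0).
  { intros y. destruct (Hh y) as [s [H1 H2]]. unfold Sh. rewrite (tsum_eq _ s H1). auto. }
  assert (Hpt : forall x, (sqrtm om x + sqrtm psi x) * sqrtm h x =
     (B x + c x + m x) * psi x * h x - sum_list (fun y => psi y * (b y x * h x)) F).
  { intros x. rewrite sqrtm_plus. destruct (Hlt x) as [s [Hs Hom]].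
    assert (Es : s = psi x * B x - sum_list (fun y => b x y * psi y) F).
    { eapply has_sum_unique; [exact Hs|].
      eapply has_sum_ext; [|apply has_sum_minus; [apply has_sum_scal, HB|apply has_sum_finite]]; auto.
      - intros y; simpl; ring.
      - intros y Hy; rewrite (H0 y Hy); ring. }
    rewrite sqrtm_mult, Hom, Es.
    rewrite (sum_list_ext (fun y => psi y * (b y x * h x)) (fun y => h x * (b x y * psi y)))
      by (intros y _; rewrite (Hb_sym y x); ring).
    rewrite sum_list_scal. field. pose proof (Hm x); lra. }
  unfold inner. rewrite (tsum_ext _ _ Hpt). apply tsum_eq.
  replace 0 with (sum_list (fun x => (B x + c x + m x) * psi x * h x) F -
                  sum_list (fun y => psi y * (h y * B y - Sh y)) F).
  - apply has_sum_minus.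
    + apply has_sum_finite; auto. intros x Hx; rewrite (H0 x Hx); ring.
    + apply (has_sum_sum_list (fun y x => psi y * (b y x * h x))). intros y _. apply has_sum_scal.
      eapply has_sum_ext; [|apply has_sum_minus; [apply has_sum_scal, HB|apply (proj1 (HSh y))]].
      intros x; simpl; ring.
  - rewrite <- sum_list_minus, <- (sum_list_zero F). apply sum_list_ext. intros y _.
    pose proof (proj2 (HSh y)). transitivity (psi y * (Sh y + (c y + m y) * h y)); [ring|].
    rewrite H; ring.
Qed.

Lemma finsupp_plus_scal g h t : finsupp g -> finsupp h -> finsupp (fun y => g y + t * h y).
Proof.
  intros [l1 H1] [l2 H2]. exists (l1 ++ l2). intros x Hx.
  rewrite H1, H2; [ring| |]; intros H; apply Hx, in_or_app; auto.
Qed.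

Definition qvec_Cc (a : edge_vertex -> R) : Prop := exists phi, finsupp phi /\ forall i, a i = qvec phi i.

Lemma qvec_Cc_square_summable a : qvec_Cc a -> square_summable a.
Proof.
  intros [phi [Hphi E]]. apply square_summable_ext with (qvec phi); [intros; rewrite E; auto|].
  apply finsupp_qvec_square_summable; auto.
Qed.

Lemma qvec_Cc_plus_scal a a' t : qvec_Cc a -> qvec_Cc a' -> qvec_Cc (fun i => a i + t * a' i).
Proof.
  intros [phi [H1 E1]] [phi' [H2 E2]]. exists (fun y => phi y + t * phi' y).
  split; [apply finsupp_plus_scal; auto|]. intros i. rewrite qvec_plus_scal, E1, E2; auto.
Qed.

Lemma qvec_Cc_0 : qvec_Cc (fun _ => 0).
Proof. exists (fun _ => 0). split; [exists []; auto|]. intros [p|x]; simpl; ring. Qed.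

Lemma edge_cauchy_of_qvec_cauchy (phi : nat -> V -> R) :
  (forall n, square_summable (qvec (phi n))) -> l2_cauchy (fun n => qvec (phi n)) -> edge_cauchy V b phi.
Proof.
  intros Hl2 HC eps He. destruct (HC (eps / 2)) as [N HN]; [lra|]. exists N. intros n k Hn Hk x y.
  specialize (HN n k Hn Hk).
  rewrite (sqnorm_ext _ (qvec (fun z => phi n z + -1 * phi k z))) in HN
    by (intros; rewrite qvec_plus_scal; ring).
  pose proof (qvec_edge_le (fun z => phi n z + -1 * phi k z) x y) as Hedge.
  replace (phi n x - phi k x - (phi n y - phi k y)) with (phi n x + -1 * phi k x - (phi n y + -1 * phi k y))
    by ring.
  enough (b x y * ((phi n x + -1 * phi k x - (phi n y + -1 * phi k y)) *
                   (phi n x + -1 * phi k x - (phi n y + -1 * phi k y))) <= 2 * (eps / 2)) by lra.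
  eapply Rle_trans; [apply Hedge|lra].
  apply square_summable_ext with (fun i => qvec (phi n) i + -1 * qvec (phi k) i);
    [intros; rewrite qvec_plus_scal; ring|apply square_summable_plus, square_summable_scal; auto].
Qed.

(* The vertex coordinates of [qvec] determine the function, and the edge
   coordinates are then continuous in it. *)
Lemma qvec_pointwise_limit (g : nat -> V -> R) (Z : edge_vertex -> R) :
  (forall i, Un_cv (fun n => qvec (g n) i) (Z i)) ->
  (forall x, Un_cv (fun n => g n x) (Z (inr x) / sqrt (c x + m x))) /\
  (forall i, Z i = qvec (fun x => Z (inr x) / sqrt (c x + m x)) i).
Proof.
  intros Hcv. assert (Hsq : forall x, 0 < sqrt (c x + m x)) by (intros; apply sqrt_lt_R0, cm_pos).
  assert (Hpt : forall x, Un_cv (fun n => g n x) (Z (inr x) / sqrt (c x + m x))).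
  { intros x. replace (fun n => g n x) with (fun n => qvec (g n) (inr x) * / sqrt (c x + m x)).
    - apply CV_mult; [apply Hcv|apply Un_cv_const].
    - apply functional_extensionality; intros n; simpl. field. specialize (Hsq x); lra. }
  split; auto. intros [[p q]|x]; simpl.
  - eapply UL_sequence; [apply (Hcv (inl (p, q)))|]. simpl.
    apply CV_mult; [apply Un_cv_const|apply CV_minus; apply Hpt].
  - field. specialize (Hsq x); lra.
Qed.

Lemma finite_energy_projection fr : square_summable (qvec fr) ->
  exists (phi : nat -> V -> R) (h : V -> R),
    (forall n, finsupp (phi n)) /\ square_summable (qvec h) /\
    (forall x, Un_cv (fun n => phi n x) (fr x - h x)) /\ edge_cauchy V b phi /\
    (forall psi, finsupp psi -> inner (qvec h) (qvec psi) = 0).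
Proof.
  intros Hfr.
  destruct (orthogonal_residual qvec_Cc (qvec fr)) as [A [Z [HA [HZ [Hpt [Hcv Horth]]]]]];
    auto using qvec_Cc_square_summable, qvec_Cc_plus_scal, qvec_Cc_0.
  set (phi := fun n => proj1_sig (constructive_indefinite_description _ (HA n))).
  assert (Hphi : forall n, finsupp (phi n) /\ forall i, A n i = qvec (phi n) i)
    by (intros n; unfold phi; destruct constructive_indefinite_description; auto).
  assert (Hres : forall n i, qvec fr i - A n i = qvec (fun x => fr x + -1 * phi n x) i)
    by (intros n i; rewrite qvec_plus_scal, (proj2 (Hphi n)); ring).
  destruct (qvec_pointwise_limit (fun n x => fr x + -1 * phi n x) Z) as [Hg HZq].
  { intros i. replace (fun n => qvec (fun x => fr x + -1 * phi n x) i) with (fun n => qvec fr i - A n i)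
      by (apply functional_extensionality; auto). apply Hpt. }
  set (h := fun x => Z (inr x) / sqrt (c x + m x)) in *.
  exists phi, h. split; [intros; apply Hphi|split; [|split; [|split]]].
  - apply square_summable_ext with Z; auto.
  - intros x. replace (fun n => phi n x) with (fun n => fr x - (fr x + -1 * phi n x))
      by (apply functional_extensionality; intros; ring).
    apply CV_minus; [apply Un_cv_const|apply Hg].
  - apply edge_cauchy_of_qvec_cauchy; [intros; apply finsupp_qvec_square_summable, Hphi|].
    assert (HC : l2_cauchy (fun n i => qvec fr i - A n i)).
    { apply (l2_cv_cauchy _ Z); auto. intros n.
      apply square_summable_minus; auto. apply qvec_Cc_square_summable; auto. }
    intros eps He. destruct (HC eps He) as [N HN]. exists N. intros n k Hn Hk.
    rewrite sqnorm_minus_sym. eapply Rle_trans; [|apply (HN n k Hn Hk)]. right.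
    apply sqnorm_ext; intros i. rewrite !(proj2 (Hphi _)). ring.
  - intros psi Hpsi. rewrite <- (Horth (qvec psi)); [|exists psi; auto].
    apply tsum_ext; intros i; rewrite HZq; auto.
Qed.

Implicit Types (u w : V -> Cplx) (k : bool).

Lemma Cc_Cpart k u : Cc V u -> finsupp (fun x => Cpart k (u x)).
Proof. intros [l Hl]; exists l; intros x Hx; rewrite Hl; auto; apply Cpart_C0. Qed.

Lemma Ltilde_Cpart k u w : (forall x, Ltilde_at V m b c u x (w x)) ->
  Lop (fun x => Cpart k (u x)) (fun x => Cpart k (w x)).
Proof.
  intros H x. destruct (H x) as [s [Hs Hw]]. exists (Cpart k s). split.
  - eapply has_sum_ext; [|apply (proj1 (HasSumC_has_sum _ _) Hs k)].
    intros y; simpl. rewrite Cpart_scale, Cpart_sub; auto.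
  - rewrite Hw, Cpart_scale, Cpart_add, Cpart_scale; auto.
Qed.

Lemma sqrtm_Cpart_sqr_le k u w x :
  0 <= (sqrtm (fun y => Cpart k (u y)) x - sqrtm (fun y => Cpart k (w y)) x) *
       (sqrtm (fun y => Cpart k (u y)) x - sqrtm (fun y => Cpart k (w y)) x)
    <= Cnorm2 (Csub (u x) (w x)) * m x.
Proof.
  unfold sqrtm. rewrite <- Rmult_minus_distr_l, sqrt_mult_self_l by (apply Rlt_le, Hm).
  pose proof (Hm x). pose proof (Cpart_sqr_le k (Csub (u x) (w x))). rewrite Cpart_sub in *.
  pose proof (Rle_0_sqr (Cpart k (u x) - Cpart k (w x))). unfold Rsqr in *. split; nra.
Qed.

Lemma l2dist2_le_sqrtm_Cpart k u w r : l2dist2_le V m u w r ->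
  exists t, has_sum (fun x => (sqrtm (fun y => Cpart k (u y)) x - sqrtm (fun y => Cpart k (w y)) x) *
                              (sqrtm (fun y => Cpart k (u y)) x - sqrtm (fun y => Cpart k (w y)) x)) t /\ t <= r.
Proof.
  intros [s [Hs Hsr]]. apply HasSumR_has_sum in Hs.
  destruct (has_sum_dominated _ _ s (sqrtm_Cpart_sqr_le k u w) Hs) as [t [Ht Hts]].
  exists t; split; auto; lra.
Qed.

Lemma l2_sqrtm_Cpart k u : l2 V m u -> square_summable (sqrtm (fun x => Cpart k (u x))).
Proof.
  intros [s Hs]. destruct (l2dist2_le_sqrtm_Cpart k u (fun _ => C0) s) as [t [Ht _]].
  - exists s; split; [|lra]. apply HasSumR_has_sum. apply HasSumR_has_sum in Hs.
    eapply has_sum_ext; [|exact Hs]. intros x; simpl.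
    unfold Cnorm2, Csub, Cadd, Copp, C0; simpl. ring.
  - exists t. eapply has_sum_ext; [|exact Ht]. intros x; simpl.
    unfold sqrtm. rewrite Cpart_C0. ring.
Qed.

Lemma l2_converges_sqrtm_Cpart k us u : l2_converges_to V m us u ->
  l2_cv (fun n => sqrtm (fun x => Cpart k (us n x))) (sqrtm (fun x => Cpart k (u x))).
Proof.
  intros H eps He. destruct (H eps He) as [N HN]. exists N. intros n Hn.
  destruct (l2dist2_le_sqrtm_Cpart k _ _ _ (HN n Hn)) as [t [Ht Hte]].
  unfold sqnorm. rewrite (tsum_eq _ t Ht). auto.
Qed.

Lemma l2_converges_eventually_square_summable k us u : l2_converges_to V m us u -> l2 V m u ->
  exists M, forall n, (M <= n)%nat -> square_summable (sqrtm (fun x => Cpart k (us n x))).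
Proof.
  intros H Hu. destruct (H 1 Rlt_0_1) as [M HM]. exists M. intros n Hn.
  destruct (l2dist2_le_sqrtm_Cpart k _ _ _ (HM n Hn)) as [t [Ht _]].
  apply square_summable_ext with (fun x => (sqrtm (fun y => Cpart k (us n y)) x - sqrtm (fun y => Cpart k (u y)) x)
                                           + sqrtm (fun y => Cpart k (u y)) x); [intros; ring|].
  apply square_summable_plus; [exists t; auto|apply l2_sqrtm_Cpart; auto].
Qed.

Lemma l2_RtoC g : square_summable (sqrtm g) -> l2 V m (fun x => RtoC (g x)).
Proof.
  intros [s Hs]. exists s. apply HasSumR_has_sum. eapply has_sum_ext; [|exact Hs].
  intros x. cbv beta. rewrite sqrtm_mult. unfold Cnorm2, RtoC; simpl. ring.
Qed.

Lemma inner_is_RtoC u g : l2 V m u -> square_summable (sqrtm g) ->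
  inner_is V m u (fun x => RtoC (g x))
    (inner (sqrtm (fun x => Cpart true (u x))) (sqrtm g), inner (sqrtm (fun x => Cpart false (u x))) (sqrtm g)).
Proof.
  intros Hu Hg. apply HasSumC_has_sum. intros k.
  apply has_sum_ext with (fun x => sqrtm (fun y => Cpart k (u y)) x * sqrtm g x).
  - intros x. rewrite sqrtm_mult. destruct k; simpl; ring.
  - destruct k; apply tsumP, square_summable_mult; auto; apply l2_sqrtm_Cpart; auto.
Qed.

Lemma closure_orthogonal_neg_eigen h k u u' : Lop h (fun x => - h x) -> square_summable (sqrtm h) ->
  closure_graph V m (L0_graph V m b c) u u' ->
  inner (fun x => sqrtm (fun y => Cpart k (u' y)) x + sqrtm (fun y => Cpart k (u y)) x) (sqrtm h) = 0.
Proof.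
  intros Hh Hh2 [Hu [Hu' [us [ws [HG [Hcu Hcw]]]]]].
  destruct (l2_converges_eventually_square_summable k us u Hcu Hu) as [M1 HM1].
  destruct (l2_converges_eventually_square_summable k ws u' Hcw Hu') as [M2 HM2].
  set (M := max M1 M2).
  apply (inner_eq0_of_l2_cv (fun n x => sqrtm (fun y => Cpart k (ws (n + M)%nat y)) x +
                                         sqrtm (fun y => Cpart k (us (n + M)%nat y)) x)); auto.
  - intros n. apply square_summable_plus; [apply HM2|apply HM1]; lia.
  - apply square_summable_plus; apply l2_sqrtm_Cpart; auto.
  - apply l2_cv_plus; try (apply l2_sqrtm_Cpart; auto).
    + intros n; apply HM2; lia.
    + intros n; apply HM1; lia.
    + exact (l2_cv_shift _ _ M (l2_converges_sqrtm_Cpart k _ _ Hcw)).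
    + exact (l2_cv_shift _ _ M (l2_converges_sqrtm_Cpart k _ _ Hcu)).
  - intros n. destruct (HG (n + M)%nat) as [Hcc HL].
    apply Lop_green; auto; [apply Cc_Cpart|apply Ltilde_Cpart]; auto.
Qed.

Lemma neg_eigen_in_adjoint h : Lop h (fun x => - h x) -> square_summable (sqrtm h) ->
  adjoint_graph V m (closure_graph V m (L0_graph V m b c)) (fun x => RtoC (h x)) (fun x => RtoC (- h x)).
Proof.
  intros Hh Hh2.
  assert (Hmh : square_summable (sqrtm (fun x => - h x))).
  { apply square_summable_ext with (fun x => -1 * sqrtm h x); [intros; unfold sqrtm; ring|].
    apply square_summable_scal; auto. }
  split; [apply l2_RtoC; auto|split; [apply l2_RtoC; auto|]].
  intros u u' Hcl. pose proof Hcl as [Hu [Hu' _]].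
  assert (Hk : forall k, inner (sqrtm (fun x => Cpart k (u x))) (sqrtm (fun x => - h x)) =
                         inner (sqrtm (fun x => Cpart k (u' x))) (sqrtm h)).
  { intros k. pose proof (closure_orthogonal_neg_eigen h k u u' Hh Hh2 Hcl) as H0.
    pose proof (l2_sqrtm_Cpart k u Hu). pose proof (l2_sqrtm_Cpart k u' Hu').
    rewrite inner_plus_l in H0 by auto.
    replace (sqrtm (fun x => - h x)) with (fun x => - sqrtm h x)
      by (apply functional_extensionality; intros; unfold sqrtm; ring).
    rewrite inner_opp_r by auto. lra. }
  eexists; split; [apply inner_is_RtoC; auto|]. rewrite <- !Hk. apply inner_is_RtoC; auto.
Qed.

(* A graph pair [(psi, L~ psi)] satisfies [|psi|^2 <= <L~ psi + psi, psi>]; this survives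
   in the closure and forbids [(h, -h)] there unless [h = 0]. *)
Lemma closure_neg_eigen_trivial h :
  closure_graph V m (L0_graph V m b c) (fun x => RtoC (h x)) (fun x => RtoC (- h x)) ->
  sqnorm (sqrtm h) = 0.
Proof.
  intros [Hu [Hw [us [ws [HG [Hcu Hcw]]]]]].
  destruct (l2_converges_eventually_square_summable true us _ Hcu Hu) as [M1 HM1].
  destruct (l2_converges_eventually_square_summable true ws _ Hcw Hw) as [M2 HM2].
  set (M := max M1 M2).
  apply (sqnorm_eq0_of_accretive_cv (fun n => sqrtm (fun x => Cpart true (us (n + M)%nat x)))
                                    (fun n => sqrtm (fun x => Cpart true (ws (n + M)%nat x)))).
  - exact (l2_sqrtm_Cpart true _ Hu).
  - intros n. apply HM1; lia.
  - intros n. apply HM2; lia.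
  - exact (l2_cv_shift _ _ M (l2_converges_sqrtm_Cpart true _ _ Hcu)).
  - apply (l2_cv_ext_r _ (sqrtm (fun x => Cpart true (RtoC (- h x))))); [intros; unfold sqrtm; simpl; ring|].
    exact (l2_cv_shift _ _ M (l2_converges_sqrtm_Cpart true _ _ Hcw)).
  - intros n. destruct (HG (n + M)%nat) as [Hcc HL].
    apply Lop_accretive; [apply Cc_Cpart|apply Ltilde_Cpart]; auto.
Qed.

Lemma DQN_qvec_Cpart k f : DQN V m b c f -> square_summable (qvec (fun x => Cpart k (f x))).
Proof.
  intros [[sl Hsl] [se [s1 [s2 [Hs1 [Hs2 _]]]]]]. apply HasSumR_has_sum in Hsl, Hs1, Hs2.
  set (fr := fun x => Cpart k (f x)).
  destruct (has_sum_dominated (fun p : V * V => b (fst p) (snd p) * ((fr (fst p) - fr (snd p)) * (fr (fst p) - fr (snd p))))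
    (fun p : V * V => b (fst p) (snd p) * Cnorm2 (Csub (f (fst p)) (f (snd p)))) s1) with (2 := Hs1)
    as [t1 [Ht1 _]].
  { intros p. pose proof (Hb_nonneg (fst p) (snd p)). pose proof (Cpart_sqr_le k (Csub (f (fst p)) (f (snd p)))).
    pose proof (Rle_0_sqr (fr (fst p) - fr (snd p))). unfold fr, Rsqr in *. rewrite Cpart_sub in *.
    split; [apply Rmult_le_pos|apply Rmult_le_compat_l]; auto. }
  destruct (has_sum_dominated (fun x => (c x + m x) * (fr x * fr x))
    (fun x => c x * Cnorm2 (f x) + Cnorm2 (f x) * m x) (s2 + sl)) with (2 := has_sum_plus _ _ _ _ Hs2 Hsl)
    as [t2 [Ht2 _]].
  { intros x. pose proof (cm_pos x). pose proof (Cpart_sqr_le k (f x)). pose proof (Hc x). pose proof (Hm x).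
    pose proof (Rle_0_sqr (fr x)). unfold fr, Rsqr in *. split; nra. }
  apply (qvec_square_summable fr t1 t2); auto.
Qed.

Lemma sqnorm_sqrtm_pos h x : square_summable (sqrtm h) -> h x <> 0 -> 0 < sqnorm (sqrtm h).
Proof.
  intros Hh Hx. eapply Rlt_le_trans; [|apply (sqnorm_ge_coord _ x Hh)].
  rewrite sqrtm_mult. apply Rmult_lt_0_compat; auto.
  destruct (Rlt_or_le 0 (h x)); [nra|]. destruct (Rle_lt_or_eq_dec _ _ H); [nra|contradiction].
Qed.

Lemma not_essentially_selfadjoint f : DQN V m b c f -> boundary_value_nonzero V b f ->
  ~ essentially_selfadjoint V m (L0_graph V m b c).
Proof.
  intros Hf [xs [Hxs1 [Hxs2 [z [Hz Hfz]]]]] HESA.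
  destruct (Cpart_neq0 z Hz) as [k Hk].
  set (fr := fun x => Cpart k (f x)).
  destruct (finite_energy_projection fr (DQN_qvec_Cpart k f Hf))
    as [phi [h [Hcc [Hh [Hcv [Hedge Horth]]]]]].
  assert (Heig : Lop h (fun x => - h x)).
  { apply qvec_orthogonal_Lop_neg_eigen; auto. intros y. apply Horth. exists [y].
    intros x Hx. unfold delta. destruct (classic_eq_dec x y); [subst; exfalso; apply Hx; left|]; auto. }
  assert (Hbv : Un_cv (fun n => fr (xs n) - h (xs n)) 0)
    by (apply (Cc_limit_vanishes_at_boundary V b xs phi (fun x => fr x - h x)); auto; split; auto).
  assert (Hhz : Un_cv (fun n => h (xs n)) (Cpart k z)).
  { replace (fun n => h (xs n)) with (fun n => fr (xs n) - (fr (xs n) - h (xs n)))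
      by (apply functional_extensionality; intros; ring).
    rewrite <- (Rminus_0_r (Cpart k z)). apply CV_minus; auto. apply C_cv_Cpart; auto. }
  assert (Hnz : exists x, h x <> 0).
  { apply NNPP; intro Hn. apply Hk. eapply UL_sequence; [exact Hhz|].
    replace (fun n => h (xs n)) with (fun _ : nat => 0); [apply Un_cv_const|].
    apply functional_extensionality; intros n. apply NNPP; intro E. apply Hn; eauto. }
  destruct Hnz as [x Hx]. destruct (sqnorm_sqrtm_le_qvec h Hh) as [Hh2 _].
  pose proof (sqnorm_sqrtm_pos h x Hh2 Hx).
  enough (sqnorm (sqrtm h) = 0) by lra.
  apply closure_neg_eigen_trivial, HESA, neg_eigen_in_adjoint; auto.
Qed.
End FormHilbertSpace.

Theorem mainTheorem12
  (V : Type)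
  (HV : exists enc : V -> nat, forall x y, enc x = enc y -> x = y)
  (m : V -> R) (Hm : forall x, 0 < m x)
  (b : V -> V -> R) (c : V -> R)
  (Hb_nonneg : forall x y, 0 <= b x y)
  (Hb_diag : forall x, b x x = 0)
  (Hb_sym : forall x y, b x y = b y x)
  (Hb_sum : forall x, exists s, HasSumR (fun y => b x y) s)
  (Hc : forall x, 0 <= c x)
  (Hconn : connected V b)
  (Hf : exists f : V -> Cplx, DQN V m b c f /\ boundary_value_nonzero V b f) :
  ~ form_eq V (DQN V m b c) (QN_val V b c) (DQD V m b c) (QD_val V m b c) /\
  (FC V m b c -> ~ essentially_selfadjoint V m (L0_graph V m b c)).
Proof.
  destruct Hf as [f [Hdqn Hbv]].
  assert (Hb_sum' : forall x, exists s, has_sum (fun y => b x y) s)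
    by (intros x; destruct (Hb_sum x) as [s Hs]; exists s; apply HasSumR_has_sum; auto).
  split.
  - intros [Hdom _]. apply (boundary_value_nonzero_not_DQD V m Hm b c Hb_nonneg Hc f Hbv), Hdom; auto.
  -
    intros _. apply (not_essentially_selfadjoint V m b c Hm Hb_nonneg Hb_diag Hb_sym Hb_sum' Hc f Hdqn Hbv).
Qed.
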